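(* Let $\mathbf F$ be a Baire foliage tree on a space $X$ and let $\varphi$ be a consistent family of foliage grafts for $\mathbf F$ such that every $\mathbf G\in\varphi$ is $\aleph_0$-branching, locally strict, open in $X$, has bounded chains, and has $\mathrm{height}\,\mathbf G\le\omega$. Then $\mathrm{fhybr}(\mathbf F,\varphi)$ is a Baire foliage tree on the subspace $X\setminus\mathrm{loss}(\mathbf F,\varphi)$ of $X$.
   Context: Trees: a tree is a pair $(Q,<)$ with $<$ irreflexive transitive and predecessor sets well-ordered; $\parallel$ = incomparable; $\mathrm{sons}(x)$ = immediate successors; $\max$ = maximal nodes; $0$ = least node; a branch is a maximal chain; bounded chains: every nonempty chain has an upper-bound node; $\kappa$-branching: every non-maximal node has exactly $\kappa$ sons; height of the tree = least ordinal $\beta$ with no node whose predecessor set has order type $\beta$; $A{\downarrow}=\{v:\exists a\in A\ a\le v\}$; for an antichain $A$ and $x\in A{\downarrow}$, $\mathrm{root}(x,A)$ is the unique $r\in A$, $r\le x$. A graft for a tree $\mathcal T$ is a tree $\mathcal G$ with more than one node, least node $0_{\mathcal G}\in\mathrm{nodes}\,\mathcal T$, $\max\mathcal G\subseteq\{v\in\mathrm{nodes}\,\mathcal T:v>_{\mathcal T}0_{\mathcal G}\}$ an antichain in $\mathcal T$, and $\mathrm{impl}\,\mathcal G:=\mathrm{nodes}\,\mathcal G\setminus(\{0_{\mathcal G}\}\cup\max\mathcal G)$ disjoint from $\mathrm{nodes}\,\mathcal T$; $\mathrm{expl}(\mathcal T,\mathcal G)=\{v:v>_{\mathcal T}0_{\mathcal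 G}\}\setminus(\max\mathcal G){\downarrow}_{\mathcal T}$. A consistent family $\gamma$ of grafts for $\mathcal T$: members are grafts with pairwise disjoint implants and for distinct $\mathcal D,\mathcal E$: $0_{\mathcal D}\parallel_{\mathcal T}0_{\mathcal E}$ or $0_{\mathcal D}\in(\max\mathcal E){\downarrow}_{\mathcal T}$ or $0_{\mathcal E}\in(\max\mathcal D){\downarrow}_{\mathcal T}$. $\mathrm{supp}(\mathcal T,\gamma)=\mathrm{nodes}\,\mathcal T\setminus\bigcup_{\mathcal G\in\gamma}\mathrm{expl}(\mathcal T,\mathcal G)$. $\mathrm{hybr}(\mathcal T,\gamma)$ is the tree on $\mathrm{supp}(\mathcal T,\gamma)\cup\bigcup_{\mathcal G\in\gamma}\mathrm{impl}\,\mathcal G$ with $x<y$ iff: (b1) $x,y\in\mathrm{supp}$, $x<_{\mathcal T}y$; (b2) $x,y\in\mathrm{impl}\,\mathcal G$, $x<_{\mathcal G}y$; (b3) $x\in\mathrm{supp}$, $y\in\mathrm{impl}\,\mathcal G$, $x\le_{\mathcal T}0_{\mathcal G}$; (b4) $x\in\mathrm{impl}\,\mathcal G$, $y\in\mathrm{supp}\cap(\max\mathcal G){\downarrow}_{\mathcal T}$, $x<_{\mathcal G}\mathrm{root}_{\mathcal T}(y,\max\mathcal G)$; or (b5) $x\in\mathrm{impl}\,\mathcal D$, $y\in\mathrm{impl}\,\mathcal E$ ($\mathcal D\ne\mathcal E$), $0_{\mathcal E}\in(\max\mathcal D){\downarrow}_{\mathcal T}$, $x<_{\mathcal D}\mathrm{root}_{\mathcal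 T}(0_{\mathcal E},\max\mathcal D)$. Foliage trees: $\mathbf F=(\mathcal T,l)$, skeleton $\mathrm{skel}\,\mathbf F=\mathcal T$, leaves $\mathbf F_x=l(x)$; tree notions refer to the skeleton; $\mathrm{fruit}_{\mathbf F}(A)=\bigcap_{x\in A}\mathbf F_x$. Nonincreasing: $x\le y\Rightarrow\mathbf F_y\subseteq\mathbf F_x$; locally strict: each non-maximal $\mathbf F_x$ is the union of the pairwise disjoint family $(\mathbf F_s)_{s\in\mathrm{sons}(x)}$; strict branches: has a node and every branch has singleton fruit; open in $X$: all leaves open. A Baire foliage tree on $X$ is a foliage tree with skeleton isomorphic to $(\omega^{<\omega},\subsetneq)$, open in $X$, locally strict, with strict branches, and leaf at the least node equal to $X$. A foliage graft for a nonincreasing $\mathbf F$ is a nonincreasing foliage tree $\mathbf G$ with $\mathrm{skel}\,\mathbf G$ a graft for $\mathrm{skel}\,\mathbf F$, $\mathbf G_{0_{\mathbf G}}\subseteq\mathbf F_{0_{\mathbf G}}$, and $\mathbf G_m=\mathbf F_m$ for $m\in\max\mathbf G$; $\mathrm{cut}(\mathbf F,\mathbf G)=\mathbf F_{0_{\mathbf G}}\setminus\mathbf G_{0_{\mathbf G}}$. $\varphi$ is a consistent family of foliage grafts for $\mathbf F$ if its members are foliage grafts for $\mathbf F$ with pairwise distinct skeletons forming a consistent family of grafts for $\mathrm{skel}\,\mathbf F$; $\mathrm{loss}(\mathbf F,\varphi)=\bigcup_{\mathbf G\in\varphi}\mathrm{cut}(\mathbf F,\mathbf G)$; $\mathrm{supp}(\mathbf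 F,\varphi)$ is the support of $\mathrm{skel}\,\mathbf F$ for the skeletons. $\mathrm{fhybr}(\mathbf F,\varphi)$ is the foliage tree $\mathbf H$ with skeleton $\mathrm{hybr}(\mathrm{skel}\,\mathbf F,\{\mathrm{skel}\,\mathbf G:\mathbf G\in\varphi\})$ and leaves $\mathbf H_x=\mathbf G_x\setminus\mathrm{loss}(\mathbf F,\varphi)$ for $x\in\mathrm{impl}\,\mathbf G$, $\mathbf H_x=\mathbf F_x\setminus\mathrm{loss}(\mathbf F,\varphi)$ for $x\in\mathrm{supp}(\mathbf F,\varphi)$. (A Baire foliage tree is nonincreasing, so the foliage grafts make sense.) *)

From Stdlib Require Import List Arith.
Import ListNotations.
Set Implicit Arguments.

Record tree (N : Type) := Tree { nodes : N -> Prop; lt : N -> N -> Prop }.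

Definition le {N} (T : tree N) (x y : N) : Prop := x = y \/ lt T x y.
Definition comparable {N} (T : tree N) (x y : N) : Prop := le T x y \/ le T y x.
Definition parallel {N} (T : tree N) (x y : N) : Prop := ~ comparable T x y.
Definition chain {N} (T : tree N) (C : N -> Prop) : Prop :=
  (forall x, C x -> nodes T x) /\ (forall x y, C x -> C y -> comparable T x y).

Definition is_tree {N} (T : tree N) : Prop :=
  (forall x y, lt T x y -> nodes T x /\ nodes T y) /\
  (forall x, ~ lt T x x) /\
  (forall x y z, lt T x y -> lt T y z -> lt T x z) /\
  (forall x, nodes T x ->
     chain T (fun y => lt T y x) /\
     (forall S : N -> Prop, (forall y, S y -> lt T y x) -> (exists y, S y) ->
        exists m, S m /\ forall y, S y -> le T m y)).

Definition sons {N} (T : tree N) (x s : N) : Prop :=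
  nodes T s /\ lt T x s /\ ~ (exists z, lt T x z /\ lt T z s).
Definition is_max {N} (T : tree N) (x : N) : Prop :=
  nodes T x /\ ~ (exists y, lt T x y).
Definition is_least {N} (T : tree N) (r : N) : Prop :=
  nodes T r /\ forall x, nodes T x -> le T r x.
Definition branch {N} (T : tree N) (B : N -> Prop) : Prop :=
  chain T B /\ forall C, chain T C -> (forall x, B x -> C x) -> forall x, C x -> B x.
Definition bounded_chains {N} (T : tree N) : Prop :=
  forall C, chain T C -> (exists x, C x) ->
    exists u, nodes T u /\ forall c, C c -> le T c u.
Definition aleph0_branching {N} (T : tree N) : Prop :=
  forall x, nodes T x -> ~ is_max T x ->
    exists f : nat -> N, (forall i j, f i = f j -> i = j) /\
                         (forall s, sons T x s <-> exists i, f i = s).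

Definition pred_type_fin {N} (T : tree N) (x : N) (n : nat) : Prop :=
  exists f : nat -> N,
    (forall i j, i < j -> j < n -> lt T (f i) (f j)) /\
    (forall i, i < n -> lt T (f i) x) /\
    (forall y, lt T y x -> exists i, i < n /\ f i = y).
Definition pred_type_omega {N} (T : tree N) (x : N) : Prop :=
  exists f : nat -> N,
    (forall i j, i < j -> lt T (f i) (f j)) /\
    (forall i, lt T (f i) x) /\
    (forall y, lt T y x -> exists i, f i = y).
(* height T <= omega: some ordinal beta <= omega is the order type of no
   predecessor set of a node *)
Definition height_le_omega {N} (T : tree N) : Prop :=
  (exists n, ~ exists x, nodes T x /\ pred_type_fin T x n) \/
  (~ exists x, nodes T x /\ pred_type_omega T x).

Definition strict_prefix (a b : list nat) : Prop := exists l, l <> [] /\ b = a ++ l.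
Definition iso_baire_tree {N} (T : tree N) : Prop :=
  exists f : N -> list nat,
    (forall x y, nodes T x -> nodes T y -> f x = f y -> x = y) /\
    (forall s, exists x, nodes T x /\ f x = s) /\
    (forall x y, nodes T x -> nodes T y -> (lt T x y <-> strict_prefix (f x) (f y))).

Definition downT {N} (T : tree N) (A : N -> Prop) (v : N) : Prop :=
  exists a, A a /\ le T a v.
Definition impl {N} (G : tree N) (x : N) : Prop :=
  nodes G x /\ (forall r, is_least G r -> x <> r) /\ ~ is_max G x.

Definition graft {N} (T G : tree N) : Prop :=
  is_tree G /\
  (exists x y, nodes G x /\ nodes G y /\ x <> y) /\
  (exists r, is_least G r /\ nodes T r /\
     (forall m, is_max G m -> nodes T m /\ lt T r m) /\
     (forall m m', is_max G m -> is_max G m' -> m <> m' -> parallel T m m') /\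
     (forall x, impl G x -> ~ nodes T x)).

Definition expl {N} (T G : tree N) (v : N) : Prop :=
  (exists r, is_least G r /\ lt T r v) /\ ~ downT T (is_max G) v.

Definition consistent_grafts {N} (T : tree N) (gam : tree N -> Prop) : Prop :=
  (forall G, gam G -> graft T G) /\
  (forall D E, gam D -> gam E -> D <> E ->
     (forall x, impl D x -> ~ impl E x) /\
     (forall rD rE, is_least D rD -> is_least E rE ->
        parallel T rD rE \/ downT T (is_max E) rD \/ downT T (is_max D) rE)).

Definition supp {N} (T : tree N) (gam : tree N -> Prop) (v : N) : Prop :=
  nodes T v /\ ~ (exists G, gam G /\ expl T G v).

Definition hybr {N} (T : tree N) (gam : tree N -> Prop) : tree N :=
  Tree (fun v => supp T gam v \/ exists G, gam G /\ impl G v)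
       (fun x y =>
          (supp T gam x /\ supp T gam y /\ lt T x y) \/
          (exists G, gam G /\ impl G x /\ impl G y /\ lt G x y) \/
          (supp T gam x /\ exists G, gam G /\ impl G y /\
                      exists r, is_least G r /\ le T x r) \/
          (exists G, gam G /\ impl G x /\ supp T gam y /\
                      exists m, is_max G m /\ le T m y /\ lt G x m) \/
          (exists D E, gam D /\ gam E /\ D <> E /\ impl D x /\ impl E y /\
                      exists rE m, is_least E rE /\ is_max D m /\ le T m rE /\ lt D x m)).

Definition is_topology {X} (op : (X -> Prop) -> Prop) : Prop :=
  (forall U V, (forall z, U z <-> V z) -> op U -> op V) /\
  op (fun _ => True) /\ op (fun _ => False) /\
  (forall U V, op U -> op V -> op (fun z => U z /\ V z)) /\
  (forall Fam : (X -> Prop) -> Prop, (forall U, Fam U -> op U) ->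
     op (fun z => exists U, Fam U /\ U z)).
Definition open_in {X} (op : (X -> Prop) -> Prop) (Y A : X -> Prop) : Prop :=
  exists U, op U /\ forall z, A z <-> U z /\ Y z.

Record ftree (N X : Type) := FTree { skel : tree N; leaf : N -> X -> Prop }.

Definition nonincreasing {N X} (F : ftree N X) : Prop :=
  forall x y, nodes (skel F) x -> nodes (skel F) y -> le (skel F) x y ->
    forall z, leaf F y z -> leaf F x z.
Definition locally_strict {N X} (F : ftree N X) : Prop :=
  forall x, nodes (skel F) x -> ~ is_max (skel F) x ->
    (forall z, leaf F x z <-> exists s, sons (skel F) x s /\ leaf F s z) /\
    (forall s s', sons (skel F) x s -> sons (skel F) x s' -> s <> s' ->
       forall z, leaf F s z -> ~ leaf F s' z).
Definition fruit {N X} (F : ftree N X) (A : N -> Prop) (z : X) : Prop :=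
  forall x, A x -> leaf F x z.
Definition strict_branches {N X} (F : ftree N X) : Prop :=
  (exists x, nodes (skel F) x) /\
  forall B, branch (skel F) B -> exists p, forall z, fruit F B z <-> z = p.
Definition ftree_open_in {N X} (op : (X -> Prop) -> Prop) (Y : X -> Prop)
  (F : ftree N X) : Prop :=
  forall x, nodes (skel F) x -> open_in op Y (leaf F x).

Definition baire_ftree {N X} (op : (X -> Prop) -> Prop) (Y : X -> Prop)
  (F : ftree N X) : Prop :=
  is_tree (skel F) /\ iso_baire_tree (skel F) /\ ftree_open_in op Y F /\
  locally_strict F /\ strict_branches F /\
  exists r, is_least (skel F) r /\ forall z, leaf F r z <-> Y z.

Definition foliage_graft {N X} (F G : ftree N X) : Prop :=
  nonincreasing G /\ graft (skel F) (skel G) /\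
  (forall r, is_least (skel G) r -> forall z, leaf G r z -> leaf F r z) /\
  (forall m, is_max (skel G) m -> forall z, leaf G m z <-> leaf F m z).

Definition cut {N X} (F G : ftree N X) (z : X) : Prop :=
  exists r, is_least (skel G) r /\ leaf F r z /\ ~ leaf G r z.

Definition skels {N X} (phi : ftree N X -> Prop) : tree N -> Prop :=
  fun T => exists G, phi G /\ skel G = T.

Definition consistent_fgrafts {N X} (F : ftree N X) (phi : ftree N X -> Prop) : Prop :=
  (forall G, phi G -> foliage_graft F G) /\
  (forall G G', phi G -> phi G' -> G <> G' -> skel G <> skel G') /\
  consistent_grafts (skel F) (skels phi).

Definition loss {N X} (F : ftree N X) (phi : ftree N X -> Prop) (z : X) : Prop :=
  exists G, phi G /\ cut F G z.

Definition fhybr {N X} (F : ftree N X) (phi : ftree N X -> Prop) : ftree N X :=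
  FTree (hybr (skel F) (skels phi))
        (fun x z =>
           ((exists G, phi G /\ impl (skel G) x /\ leaf G x z) \/
            (supp (skel F) (skels phi) x /\ leaf F x z)) /\ ~ loss F phi z).

(* The hybrid order is well founded: below a supported node one meets supported nodes of smaller
   depth in F, or implants of grafts whose (supported) roots are shallower, and within one graft the
   order is the graft's own.  Supported nodes other than graft roots keep their sons from F, while
   graft roots and implants get exactly their sons in the graft; since grafts are aleph_0-branching
   and, having height at most omega, give every non-root node a parent, the hybrid is again a copy
   of omega^{<omega}.  A branch of the hybrid cannot end inside a graft, because such a tail plus the
   root would be a chain of the graft whose upper bound lies on the branch; so its supported nodes
   reach every depth of F and generate a branch of F.  The fruit point of that branch survives every
   cut and lies in the leaf of each implant on the branch, as graft leaves at maximal nodes are those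
   of F. *)

From Stdlib Require Import List Arith Lia Classical ClassicalEpsilon.
Import ListNotations.
Set Implicit Arguments.
Unset Strict Implicit.

Lemma comparable_sym N (T : tree N) a b : comparable T a b -> comparable T b a.
Proof. unfold comparable; tauto. Qed.

Lemma acc_has_minimal A (R : A -> A -> Prop) (P : A -> Prop) y :
  Acc R y -> P y -> exists m, P m /\ forall z, P z -> ~ R z m.
Proof.
  induction 1 as [y _ IH]; intros py.
  destruct (classic (exists z, P z /\ R z y)) as [[z [pz rz]]|nz].
  - exact (IH z rz pz).
  - exists y; split; auto. intros z pz rz. apply nz; eauto.
Qed.

Lemma strict_prefix_length a b : strict_prefix a b -> length a < length b.
Proof. intros [l [nl ->]]. rewrite length_app. destruct l; [congruence|simpl; lia]. Qed.

Lemma list_prefix_trichotomy (l1 l2 : list nat) :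
  l1 = l2 \/ strict_prefix l1 l2 \/ strict_prefix l2 l1 \/
  exists c i j a b, i <> j /\ l1 = c ++ i :: a /\ l2 = c ++ j :: b.
Proof.
  revert l2; induction l1 as [|x l1 IH]; intros [|y l2].
  - auto.
  - right; left. exists (y :: l2); split; [discriminate|reflexivity].
  - right; right; left. exists (x :: l1); split; [discriminate|reflexivity].
  - destruct (Nat.eq_dec x y) as [<-|nxy].
    + destruct (IH l2) as [<-|[[l [nl e]]|[[l [nl e]]|[c [i [j [a [b [nij [e1 e2]]]]]]]]]].
      * auto.
      * right; left. exists l; split; auto. simpl; congruence.
      * right; right; left. exists l; split; auto. simpl; congruence.
      * right; right; right. exists (x :: c), i, j, a, b. simpl; split; auto; split; congruence.
    + right; right; right. exists [], x, y, l1, l2. auto.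
Qed.

(** * Trees *)

Section TreeFacts.
Variable N : Type.
Variable T : tree N.
Hypothesis HT : is_tree T.

Lemma tree_lt_nodes x y : lt T x y -> nodes T x /\ nodes T y.
Proof. apply (proj1 HT). Qed.
Lemma tree_lt_irrefl x : ~ lt T x x.
Proof. apply (proj1 (proj2 HT)). Qed.
Lemma tree_lt_trans x y z : lt T x y -> lt T y z -> lt T x z.
Proof. apply (proj1 (proj2 (proj2 HT))). Qed.
Lemma tree_lt_asym x y : lt T x y -> lt T y x -> False.
Proof. intros a b. exact (tree_lt_irrefl (tree_lt_trans a b)). Qed.
Lemma tree_le_lt_trans x y z : le T x y -> lt T y z -> lt T x z.
Proof. intros [<-|a] b; auto. eapply tree_lt_trans; eauto. Qed.
Lemma tree_lt_le_trans x y z : lt T x y -> le T y z -> lt T x z.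
Proof. intros a [<-|b]; auto. eapply tree_lt_trans; eauto. Qed.
Lemma tree_le_lt_le_trans x y z w : le T x y -> lt T y z -> le T z w -> lt T x w.
Proof. intros a b c. destruct a as [<-|a]; [|eapply tree_lt_trans; [exact a|]];
  (destruct c as [<-|c]; [|eapply tree_lt_trans; [|exact c]]); exact b. Qed.
Lemma tree_le_trans x y z : le T x y -> le T y z -> le T x z.
Proof. intros [<-|a] b; auto. right. eapply tree_lt_le_trans; eauto. Qed.

Lemma comparable_of_lt_common a b x : lt T a x -> lt T b x -> comparable T a b.
Proof.
  intros ha hb. destruct (proj2 (proj2 (proj2 HT)) x (proj2 (tree_lt_nodes ha))) as [[_ C] _].
  apply C; auto.
Qed.
Lemma comparable_of_le_common a b x : le T a x -> le T b x -> comparable T a b.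
Proof.
  intros [<-|ha] [<-|hb].
  - left; left; auto.
  - right; right; auto.
  - left; right; auto.
  - eapply comparable_of_lt_common; eauto.
Qed.

Lemma tree_min_below x (S : N -> Prop) : (forall y, S y -> lt T y x) -> (exists y, S y) ->
  exists m, S m /\ forall y, S y -> le T m y.
Proof.
  intros hS [y hy]. apply (proj2 (proj2 (proj2 HT)) x); eauto.
  exact (proj2 (tree_lt_nodes (hS y hy))).
Qed.

Lemma tree_acc x : nodes T x -> Acc (lt T) x.
Proof.
  intros nx. apply NNPP; intro nA.
  assert (ex : exists y, lt T y x /\ ~ Acc (lt T) y).
  { apply NNPP; intro nE. apply nA. constructor. intros y hy.
    apply NNPP; intro ny. apply nE; eauto. }
  destruct (@tree_min_below x (fun y => lt T y x /\ ~ Acc (lt T) y)) as [m [[hm nm] mm]].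
  - intros y [h _]; auto.
  - auto.
  - apply nm. constructor. intros z hz. apply NNPP; intro nz.
    destruct (mm z (conj (tree_lt_trans hz hm) nz)) as [<-|h].
    + exact (tree_lt_irrefl hz).
    + exact (tree_lt_asym h hz).
Qed.

Lemma son_lt x s : sons T x s -> lt T x s.
Proof. intros [_ [h _]]; auto. Qed.

Lemma son_le_of_lt x y : lt T x y -> exists c, sons T x c /\ le T c y.
Proof.
  intros hxy.
  destruct (classic (exists z, lt T x z /\ lt T z y)) as [ex|nex].
  - destruct (@tree_min_below y (fun z => lt T x z /\ lt T z y)) as [m [[h1 h2] mm]].
    + intros z [_ h]; auto.
    + auto.
    + exists m. split; [|right; auto]. split; [exact (proj2 (tree_lt_nodes h1))|split; auto].
      intros [z [a b]]. destruct (mm z (conj a (tree_lt_trans b h2))) as [<-|c].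
      * exact (tree_lt_irrefl b).
      * exact (tree_lt_asym b c).
  - exists y. split; [|left; auto]. split; [exact (proj2 (tree_lt_nodes hxy))|split; auto].
Qed.

Lemma least_unique r1 r2 : is_least T r1 -> is_least T r2 -> r1 = r2.
Proof.
  intros [n1 h1] [n2 h2]. destruct (h1 r2 n2) as [e|a]; auto.
  destruct (h2 r1 n1) as [e|b]; auto. exfalso; exact (tree_lt_asym a b).
Qed.

Lemma branch_add B u : branch T B -> nodes T u -> (forall b, B b -> comparable T b u) -> B u.
Proof.
  intros [[Bn Bc] Bm] nu hc. apply (Bm (fun z => B z \/ z = u)); auto.
  split.
  - intros z [h| ->]; auto.
  - intros a b [ha| ->] [hb| ->]; auto.
    + apply comparable_sym; auto.
    + left; left; auto.
Qed.

Lemma branch_down_closed B a b : branch T B -> B b -> lt T a b -> B a.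
Proof.
  intros hB hb hab. apply (branch_add hB (proj1 (tree_lt_nodes hab))).
  intros c hc. destruct (proj2 (proj1 hB) c b hc hb) as [h|h].
  - eapply comparable_of_le_common; [exact h|right; exact hab].
  - right; right; eapply tree_lt_le_trans; eauto.
Qed.

Lemma branch_least B r : branch T B -> is_least T r -> B r.
Proof.
  intros hB [nr hr]. apply (branch_add hB nr).
  intros b hb. right; apply hr, (proj1 (proj1 hB)); auto.
Qed.
End TreeFacts.

Section SonsEnumeration.
Variable N : Type.
Variable T : tree N.
Hypothesis HT : is_tree T.
Variable r : N.
Hypothesis Hr : is_least T r.
Variable E : N -> nat -> N.
Hypothesis HE : forall x, nodes T x -> (forall i j, E x i = E x j -> i = j) /\
                                 (forall s, sons T x s <-> exists i, E x i = s).
Hypothesis Hpar : forall y, nodes T y -> y <> r -> exists p, sons T p y.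

Definition path_node (l : list nat) : N := fold_left (fun x i => E x i) l r.

Lemma path_node_snoc l i : path_node (l ++ [i]) = E (path_node l) i.
Proof. unfold path_node. rewrite fold_left_app. reflexivity. Qed.

Lemma path_node_son l i : sons T (path_node l) (path_node (l ++ [i])).
Proof.
  induction l as [|x l IH] using rev_ind in i |- *.
  - rewrite path_node_snoc. apply (proj2 (HE (proj1 Hr))). eauto.
  - rewrite (path_node_snoc (l ++ [x]) i). apply (proj2 (HE (proj1 (IH x)))). eauto.
Qed.

Lemma path_node_mem l : nodes T (path_node l).
Proof.
  destruct l as [|i l _] using rev_ind; [exact (proj1 Hr)|].
  exact (proj1 (path_node_son l i)).
Qed.

Lemma path_node_le_app l a : le T (path_node l) (path_node (l ++ a)).
Proof.
  induction a as [|i a IH] using rev_ind.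
  - rewrite app_nil_r; left; auto.
  - rewrite app_assoc. right.
    exact (tree_le_lt_trans HT IH (son_lt (path_node_son (l ++ a) i))).
Qed.

Lemma path_node_lt_app l a : a <> [] -> lt T (path_node l) (path_node (l ++ a)).
Proof.
  destruct a as [|i a _] using rev_ind; [congruence|].
  intros _. rewrite app_assoc.
  exact (tree_le_lt_trans HT (path_node_le_app l a) (son_lt (path_node_son (l ++ a) i))).
Qed.

Lemma path_node_fork c i j a b :
  i <> j -> ~ comparable T (path_node (c ++ i :: a)) (path_node (c ++ j :: b)).
Proof.
  intros nij hc.
  assert (hi : le T (path_node (c ++ [i])) (path_node (c ++ i :: a))).
  { replace (c ++ i :: a) with ((c ++ [i]) ++ a) by (rewrite <- app_assoc; reflexivity).
    apply path_node_le_app. }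
  assert (hj : le T (path_node (c ++ [j])) (path_node (c ++ j :: b))).
  { replace (c ++ j :: b) with ((c ++ [j]) ++ b) by (rewrite <- app_assoc; reflexivity).
    apply path_node_le_app. }
  assert (cij : comparable T (path_node (c ++ [i])) (path_node (c ++ [j]))).
  { destruct hc as [h|h].
    - exact (comparable_of_le_common HT (tree_le_trans HT hi h) hj).
    - exact (comparable_of_le_common HT hi (tree_le_trans HT hj h)). }
  pose proof (path_node_son c i) as si. pose proof (path_node_son c j) as sj.
  rewrite !path_node_snoc in *.
  destruct cij as [[e|l]|[e|l]].
  - apply nij. eapply (proj1 (HE (path_node_mem c))); eauto.
  - destruct sj as [_ [_ nb]]. apply nb. exists (E (path_node c) i). split; auto. apply si.
  - apply nij. eapply (proj1 (HE (path_node_mem c))); eauto.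
  - destruct si as [_ [_ nb]]. apply nb. exists (E (path_node c) j). split; auto. apply sj.
Qed.

Lemma path_node_inj l1 l2 : path_node l1 = path_node l2 -> l1 = l2.
Proof.
  intros e.
  destruct (list_prefix_trichotomy l1 l2)
    as [h|[[a [na ->]]|[[a [na ->]]|[c [i [j [a [b [nij [-> ->]]]]]]]]]]; auto; exfalso.
  - apply (tree_lt_irrefl HT (x := path_node l1)). rewrite e at 2. exact (path_node_lt_app l1 na).
  - apply (tree_lt_irrefl HT (x := path_node l2)). rewrite <- e at 2. exact (path_node_lt_app l2 na).
  - refine (path_node_fork nij _). rewrite e. left; left; auto.
Qed.

Lemma path_node_lt_iff l1 l2 : lt T (path_node l1) (path_node l2) <-> strict_prefix l1 l2.
Proof.
  split.
  - intros h.
    destruct (list_prefix_trichotomy l1 l2)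
      as [<-|[p|[[a [na ->]]|[c [i [j [a [b [nij [-> ->]]]]]]]]]]; auto; exfalso.
    + exact (tree_lt_irrefl HT h).
    + exact (tree_lt_asym HT h (path_node_lt_app l2 na)).
    + exact (path_node_fork nij (or_introl (or_intror h))).
  - intros [a [na ->]]. apply path_node_lt_app; auto.
Qed.

Lemma path_node_surj y : nodes T y -> exists l, path_node l = y.
Proof.
  intros ny. induction (tree_acc HT ny) as [y _ IH].
  destruct (classic (y = r)) as [->|nr].
  - exists []; reflexivity.
  - destruct (Hpar ny nr) as [p hp].
    destruct (IH p (son_lt hp) (proj1 (tree_lt_nodes HT (son_lt hp)))) as [l <-].
    destruct (proj1 (proj2 (HE (path_node_mem l)) y) hp) as [i <-].
    exists (l ++ [i]). apply path_node_snoc.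
Qed.

Lemma iso_baire_tree_of_sons_enum : iso_baire_tree T.
Proof.
  assert (ex : forall y, exists l, nodes T y -> path_node l = y).
  { intros y. destruct (classic (nodes T y)) as [ny|ny].
    - destruct (path_node_surj ny) as [l hl]; eauto.
    - exists []; intros h; contradiction. }
  set (f := fun y => proj1_sig (constructive_indefinite_description _ (ex y))).
  assert (hf : forall y, nodes T y -> path_node (f y) = y).
  { intros y ny. unfold f. destruct (constructive_indefinite_description _ (ex y)); simpl; auto. }
  exists f. split; [|split].
  - intros x y nx ny e. rewrite <- (hf x nx), <- (hf y ny), e; auto.
  - intros s. exists (path_node s). split; [apply path_node_mem|].
    apply path_node_inj, hf, path_node_mem.
  - intros x y nx ny. rewrite <- (hf x nx) at 1. rewrite <- (hf y ny) at 1. apply path_node_lt_iff.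
Qed.
End SonsEnumeration.

Section HeightOmega.
Variable N : Type.
Variable G : tree N.
Hypothesis HG : is_tree G.

(* Start at the least predecessor of [x] and repeatedly take the least one above. *)
Lemma parentless_initial_sequence x a1 : lt G a1 x -> ~ (exists p, sons G p x) ->
  exists a : nat -> N, (forall i, lt G (a i) x) /\ (forall i j, i < j -> lt G (a i) (a j)) /\
    (forall i y, lt G y (a i) -> exists j, j < i /\ a j = y).
Proof.
  intros hax np.
  assert (dense : forall p, lt G p x -> exists q, lt G p q /\ lt G q x).
  { intros p hp. apply NNPP; intro nq. apply np. exists p.
    split; [exact (proj2 (tree_lt_nodes HG hp))|split; auto]. }
  assert (ex0 : exists m, lt G m x /\ forall y, lt G y x -> le G m y).
  { destruct (@tree_min_below _ _ HG x (fun y => lt G y x) (fun y h => h)) as [m [h1 h2]]; eauto. }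
  assert (exS : forall p, exists m, lt G p x ->
            lt G p m /\ lt G m x /\ forall y, lt G p y -> lt G y x -> le G m y).
  { intros p. destruct (classic (lt G p x)) as [hp|hp].
    - destruct (@tree_min_below _ _ HG x (fun y => lt G p y /\ lt G y x)) as [m [[h1 h2] h3]].
      + intros y [_ h]; auto.
      + auto.
      + exists m. intros _. split; auto.
    - exists p. intros h; contradiction. }
  destruct (constructive_indefinite_description _ ex0) as [a0 [a0x a0m]].
  set (next := fun p => proj1_sig (constructive_indefinite_description _ (exS p))).
  assert (hnext : forall p, lt G p x -> lt G p (next p) /\ lt G (next p) x /\
                    forall y, lt G p y -> lt G y x -> le G (next p) y).
  { intros p hp. unfold next. destruct (constructive_indefinite_description _ (exS p)); simpl; auto. }
  set (a := fix a (i : nat) : N := match i with 0 => a0 | S i => next (a i) end).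
  assert (below : forall i, lt G (a i) x).
  { induction i; simpl; auto. apply hnext; auto. }
  exists a. split; [exact below|split].
  - intros i j hij. induction hij.
    + apply hnext, below.
    + eapply (tree_lt_trans HG); eauto. apply hnext, below.
  - induction i; intros y hy.
    + exfalso. destruct (a0m y (tree_lt_trans HG hy a0x)) as [e|h].
      * simpl in hy. rewrite e in hy. exact (tree_lt_irrefl HG hy).
      * exact (tree_lt_asym HG h hy).
    + assert (hyx : lt G y x) by exact (tree_lt_trans HG hy (below (S i))).
      destruct (comparable_of_lt_common HG (below i) hyx) as [[e|h]|[e|h]].
      * exists i; split; auto.
      * exfalso. destruct (proj2 (proj2 (hnext (a i) (below i))) y h hyx) as [e|h'].
        -- simpl in hy. rewrite e in hy. exact (tree_lt_irrefl HG hy).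
        -- exact (tree_lt_asym HG h' hy).
      * exists i; split; auto.
      * destruct (IHi y h) as [j [hj e]]. exists j; split; auto.
Qed.

Lemma initial_sequence_omega x (a : nat -> N) : (forall i, lt G (a i) x) ->
  (forall i j, i < j -> lt G (a i) (a j)) -> (forall i y, lt G y (a i) -> exists j, j < i /\ a j = y) ->
  exists w, nodes G w /\ pred_type_omega G w.
Proof.
  intros below incr init.
  assert (covered : forall w, (forall y, lt G y w -> lt G y x) ->
            (forall y, lt G y w -> ~ forall i, lt G (a i) y) -> forall y, lt G y w -> exists i, a i = y).
  { intros w hw hmin y hy. apply NNPP; intro ny. apply (hmin y hy). intros i.
    destruct (comparable_of_lt_common HG (below i) (hw y hy)) as [[e|h]|[e|h]].
    - exfalso; apply ny; eauto.
    - exact h.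
    - exfalso; apply ny; eauto.
    - destruct (init i y h) as [j [_ e]]. exfalso; apply ny; eauto. }
  destruct (classic (exists y, lt G y x /\ forall i, lt G (a i) y)) as [ex|nex].
  - destruct (@tree_min_below _ _ HG x (fun y => lt G y x /\ forall i, lt G (a i) y)) as [w [[w1 w2] w3]].
    { intros y [h _]; auto. } { auto. }
    exists w. split; [exact (proj1 (tree_lt_nodes HG w1))|].
    exists a. split; [exact incr|split; [exact w2|]].
    apply covered.
    + intros y hy. exact (tree_lt_trans HG hy w1).
    + intros y hy al. destruct (w3 y (conj (tree_lt_trans HG hy w1) al)) as [e|h].
      * rewrite e in hy; exact (tree_lt_irrefl HG hy).
      * exact (tree_lt_asym HG h hy).
  - exists x. split; [exact (proj2 (tree_lt_nodes HG (below 0)))|].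
    exists a. split; [exact incr|split; [exact below|]].
    apply covered; auto. intros y hy al. apply nex; eauto.
Qed.

Lemma parent_of_height_le_omega x a1 : height_le_omega G -> lt G a1 x -> exists p, sons G p x.
Proof.
  intros Hh hax. apply NNPP; intro np.
  destruct (parentless_initial_sequence hax np) as [a [below [incr init]]].
  destruct Hh as [[n hn]|hw].
  - apply hn. exists (a n). split; [exact (proj1 (tree_lt_nodes HG (below n)))|].
    exists a. split; [|split]; auto.
  - exact (hw (initial_sequence_omega below incr init)).
Qed.
End HeightOmega.

Section BaireSkeleton.
Variable N : Type.
Variable T : tree N.
Hypothesis HT : is_tree T.
Variable f : N -> list nat.
Hypothesis finj : forall x y, nodes T x -> nodes T y -> f x = f y -> x = y.
Hypothesis fsurj : forall s, exists x, nodes T x /\ f x = s.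
Hypothesis flt : forall x y, nodes T x -> nodes T y -> (lt T x y <-> strict_prefix (f x) (f y)).

Lemma depth_lt_of_lt x y : lt T x y -> length (f x) < length (f y).
Proof.
  intros h. destruct (tree_lt_nodes HT h) as [nx ny].
  exact (strict_prefix_length (proj1 (flt nx ny) h)).
Qed.
Lemma depth_le_of_le x y : le T x y -> length (f x) <= length (f y).
Proof. intros [<-|h]; [lia|]. apply depth_lt_of_lt in h; lia. Qed.

Lemma least_path_nil r : is_least T r -> f r = [].
Proof.
  intros [nr hr]. destruct (fsurj []) as [x [nx ex]].
  destruct (hr x nx) as [<-|h]; auto.
  apply depth_lt_of_lt in h. rewrite ex in h. simpl in h. lia.
Qed.

Definition node_at (s : list nat) : N := proj1_sig (constructive_indefinite_description _ (fsurj s)).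
Lemma node_at_spec s : nodes T (node_at s) /\ f (node_at s) = s.
Proof. unfold node_at. destruct (constructive_indefinite_description _ (fsurj s)); auto. Qed.
Lemma node_at_path x : nodes T x -> node_at (f x) = x.
Proof. intros nx. apply finj; auto; apply node_at_spec. Qed.

Lemma baire_sons_iff x s : nodes T x -> (sons T x s <-> exists i, node_at (f x ++ [i]) = s).
Proof.
  intros nx. split.
  - intros [ns [hl nb]]. apply flt in hl; auto. destruct hl as [a [na ea]].
    destruct a as [|i a]; [congruence|]. exists i.
    destruct a as [|j a].
    + apply finj; auto; [apply node_at_spec|]. rewrite (proj2 (node_at_spec _)); auto.
    + exfalso. apply nb. exists (node_at (f x ++ [i])). pose proof (node_at_spec (f x ++ [i])) as [n1 e1].
      split; apply flt; auto; rewrite e1.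
      * exists [i]; split; [discriminate|auto].
      * exists (j :: a); split; [discriminate|]. rewrite ea, <- app_assoc; reflexivity.
  - intros [i <-]. pose proof (node_at_spec (f x ++ [i])) as [n1 e1].
    split; auto. split.
    + apply flt; auto. rewrite e1. exists [i]; split; [discriminate|auto].
    + intros [z [a b]]. apply depth_lt_of_lt in a. apply depth_lt_of_lt in b.
      rewrite e1, length_app in b. simpl in b. lia.
Qed.

Lemma baire_son_index_inj x i j : node_at (f x ++ [i]) = node_at (f x ++ [j]) -> i = j.
Proof.
  intros e. assert (h : f (node_at (f x ++ [i])) = f (node_at (f x ++ [j]))) by (rewrite e; auto).
  rewrite !(proj2 (node_at_spec _)) in h. apply app_inv_head in h. congruence.
Qed.

Lemma baire_parent r y : is_least T r -> nodes T y -> y <> r -> exists p, sons T p y.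
Proof.
  intros hr ny nr. destruct (f y) as [|i l] eqn:ey using rev_ind.
  - exfalso. apply nr. apply finj; auto. apply hr. rewrite (least_path_nil hr); auto.
  - clear IHl. exists (node_at l). pose proof (node_at_spec l) as [n1 e1].
    apply baire_sons_iff; auto. exists i. rewrite e1, <- ey. apply node_at_path; auto.
Qed.

Lemma baire_not_max x : nodes T x -> ~ is_max T x.
Proof.
  intros nx [_ h]. apply h. exists (node_at (f x ++ [0])).
  apply son_lt, baire_sons_iff; eauto.
Qed.

Lemma baire_fork u v : nodes T u -> nodes T v -> ~ comparable T u v ->
  exists w s1 s2, sons T w s1 /\ sons T w s2 /\ s1 <> s2 /\ le T s1 u /\ le T s2 v.
Proof.
  intros nu nv nc.
  assert (below : forall c k a x, nodes T x -> f x = c ++ k :: a -> le T (node_at (c ++ [k])) x).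
  { intros c k a x nx e. pose proof (node_at_spec (c ++ [k])) as [nk ek]. destruct a as [|k' a].
    - left. apply finj; auto. rewrite ek, e. reflexivity.
    - right. apply flt; auto. rewrite ek, e.
      exists (k' :: a); split; [discriminate|]. rewrite <- app_assoc; auto. }
  destruct (list_prefix_trichotomy (f u) (f v)) as [e|[p|[p|[c [i [j [a [b [nij [e1 e2]]]]]]]]]].
  - exfalso; apply nc; left; left; apply finj; auto.
  - exfalso; apply nc; left; right; apply flt; auto.
  - exfalso; apply nc; right; right; apply flt; auto.
  - pose proof (node_at_spec c) as [nw ew].
    assert (hs : forall k, sons T (node_at c) (node_at (c ++ [k]))).
    { intros k. apply baire_sons_iff; auto. rewrite ew. eauto. }
    exists (node_at c), (node_at (c ++ [i])), (node_at (c ++ [j])).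
    split; [auto|split; [auto|split]].
    + intros e. apply nij. apply (@baire_son_index_inj (node_at c)). rewrite ew. auto.
    + split; eauto.
Qed.
End BaireSkeleton.

Section BaireFoliage.
Variables N X : Type.
Variable F : ftree N X.
Hypothesis HT : is_tree (skel F).
Variable f : N -> list nat.
Hypothesis finj : forall x y, nodes (skel F) x -> nodes (skel F) y -> f x = f y -> x = y.
Hypothesis fsurj : forall s, exists x, nodes (skel F) x /\ f x = s.
Hypothesis flt : forall x y, nodes (skel F) x -> nodes (skel F) y ->
  (lt (skel F) x y <-> strict_prefix (f x) (f y)).
Variable r : N.
Hypothesis Hr : is_least (skel F) r.
Hypothesis Fls : locally_strict F.

Lemma leaf_son_sub p s z : nodes (skel F) p -> ~ is_max (skel F) p ->
  sons (skel F) p s -> leaf F s z -> leaf F p z.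
Proof. intros np nm hs h. apply (proj1 (Fls np nm) z). eauto. Qed.

Lemma baire_nonincreasing : nonincreasing F.
Proof.
  intros v y _ ny hv z. revert hv. induction (tree_acc HT ny) as [y _ IH]. intros hv hy.
  destruct hv as [<-|l]; auto.
  assert (nr : y <> r).
  { intros ->. destruct (proj2 Hr v (proj1 (tree_lt_nodes HT l))) as [e|l'].
    - subst; exact (tree_lt_irrefl HT l).
    - exact (tree_lt_asym HT l l'). }
  destruct (baire_parent HT finj fsurj flt Hr (proj2 (tree_lt_nodes HT l)) nr) as [p hp].
  pose proof hp as [_ [lpy nb]].
  assert (np : nodes (skel F) p) by exact (proj1 (tree_lt_nodes HT lpy)).
  apply (IH p lpy np).
  - destruct (comparable_of_lt_common HT l lpy) as [h|[e|h]].
    + exact h.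
    + left; auto.
    + exfalso; apply nb; eauto.
  - exact (leaf_son_sub np (baire_not_max HT finj fsurj flt np) hp hy).
Qed.

Lemma comparable_of_common_leaf u v z : nodes (skel F) u -> nodes (skel F) v ->
  leaf F u z -> leaf F v z -> comparable (skel F) u v.
Proof.
  intros nu nv lu lv. apply NNPP; intro nc.
  destruct (baire_fork HT finj fsurj flt nu nv nc) as [w [s1 [s2 [h1 [h2 [ne [l1 l2]]]]]]].
  pose proof (proj1 (tree_lt_nodes HT (son_lt h1))) as nw.
  apply (proj2 (Fls nw (baire_not_max HT finj fsurj flt nw)) s1 s2 h1 h2 ne z).
  - exact (baire_nonincreasing (proj1 h1) nu l1 lu).
  - exact (baire_nonincreasing (proj1 h2) nv l2 lv).
Qed.
End BaireFoliage.

Lemma locally_strict_at_restrict N X (A B : ftree N X) (Q : X -> Prop) x :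
  (forall s, sons (skel A) x s <-> sons (skel B) x s) ->
  (forall y z, y = x \/ sons (skel B) x y -> (leaf A y z <-> leaf B y z /\ Q z)) ->
  (forall z, leaf B x z <-> exists s, sons (skel B) x s /\ leaf B s z) ->
  (forall s s', sons (skel B) x s -> sons (skel B) x s' -> s <> s' ->
     forall z, leaf B s z -> ~ leaf B s' z) ->
  (forall z, leaf A x z <-> exists s, sons (skel A) x s /\ leaf A s z) /\
  (forall s s', sons (skel A) x s -> sons (skel A) x s' -> s <> s' ->
     forall z, leaf A s z -> ~ leaf A s' z).
Proof.
  intros hs hl B1 B2. split.
  - intros z. rewrite (hl x z (or_introl eq_refl)), B1. split.
    + intros [[s [bs ls]] q]. exists s. split; [apply hs; auto|]. apply hl; auto.
    + intros [s [As ls]]. apply hs in As. apply (hl s z (or_intror As)) in ls.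
      destruct ls as [ls q]. split; eauto.
  - intros s s' As As' ne z l1 l2. apply hs in As. apply hs in As'.
    apply (hl s z (or_intror As)) in l1. apply (hl s' z (or_intror As')) in l2.
    exact (B2 s s' As As' ne z (proj1 l1) (proj1 l2)).
Qed.

(** * The hybrid tree *)

Section Hybrid.
Variables N X : Type.
Variable F : ftree N X.
Variable phi : ftree N X -> Prop.
Let T := skel F.
Let Gam := skels phi.
Hypothesis HT : is_tree T.
Variable f : N -> list nat.
Hypothesis finj : forall x y, nodes T x -> nodes T y -> f x = f y -> x = y.
Hypothesis fsurj : forall s, exists x, nodes T x /\ f x = s.
Hypothesis flt : forall x y, nodes T x -> nodes T y -> (lt T x y <-> strict_prefix (f x) (f y)).
Variable rT : N.
Hypothesis HrT : is_least T rT.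
Hypothesis HGam : consistent_grafts T Gam.
Hypothesis Hbr : forall G, Gam G -> aleph0_branching G /\ bounded_chains G /\ height_le_omega G.

Let Supp := supp T Gam.
Let H := hybr T Gam.

Lemma graft_of_mem G : Gam G -> graft T G.
Proof. apply (proj1 HGam). Qed.
Lemma graft_is_tree G : Gam G -> is_tree G.
Proof. intros h. exact (proj1 (graft_of_mem h)). Qed.
Lemma graft_has_least G : Gam G -> exists r, is_least G r.
Proof. intros h. destruct (graft_of_mem h) as [_ [_ [r [hr _]]]]; eauto. Qed.

Lemma graft_least_node G r : Gam G -> is_least G r -> nodes T r.
Proof.
  intros h hr. destruct (graft_of_mem h) as [hG [_ [r' [hr' [n _]]]]].
  rewrite (least_unique hG hr hr'); auto.
Qed.
Lemma graft_max_above G r m : Gam G -> is_least G r -> is_max G m -> nodes T m /\ lt T r m.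
Proof.
  intros h hr hm. destruct (graft_of_mem h) as [hG [_ [r' [hr' [n [M _]]]]]].
  rewrite (least_unique hG hr hr'); auto.
Qed.
Lemma graft_max_eq G m1 m2 : Gam G -> is_max G m1 -> is_max G m2 -> comparable T m1 m2 -> m1 = m2.
Proof.
  intros h h1 h2 hc. destruct (graft_of_mem h) as [_ [_ [r' [_ [_ [_ [A _]]]]]]].
  apply NNPP; intro ne. exact (A m1 m2 h1 h2 ne hc).
Qed.
Lemma graft_impl_not_node G x : Gam G -> impl G x -> ~ nodes T x.
Proof. intros h hx. destruct (graft_of_mem h) as [_ [_ [r' [_ [_ [_ [_ I]]]]]]]. auto. Qed.

Lemma graft_node_cases (G : tree N) r x : is_tree G -> is_least G r -> nodes G x ->
  x = r \/ is_max G x \/ impl G x.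
Proof.
  intros hG hr nx. destruct (classic (x = r)) as [e|ne]; auto.
  destruct (classic (is_max G x)) as [m|nm]; auto.
  right; right. split; auto. split; auto. intros r' hr' e. subst r'.
  apply ne. exact (least_unique hG hr' hr).
Qed.

Lemma impl_graft_unique D E x : Gam D -> Gam E -> impl D x -> impl E x -> D = E.
Proof.
  intros hD hE a b. apply NNPP; intro ne. exact (proj1 (proj2 HGam D E hD hE ne) x a b).
Qed.
Lemma consistent_roots D E rD rE : Gam D -> Gam E -> D <> E -> is_least D rD -> is_least E rE ->
  parallel T rD rE \/ downT T (is_max E) rD \/ downT T (is_max D) rE.
Proof. intros hD hE ne a b. exact (proj2 (proj2 HGam D E hD hE ne) rD rE a b). Qed.

Lemma graft_least_not_max G r : Gam G -> is_least G r -> ~ is_max G r.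
Proof. intros hG hr hm. exact (tree_lt_irrefl HT (proj2 (graft_max_above hG hr hm))). Qed.

Lemma graft_eq_of_least D E r : Gam D -> Gam E -> is_least D r -> is_least E r -> D = E.
Proof.
  intros hD hE h1 h2. apply NNPP; intro ne.
  destruct (consistent_roots hD hE ne h1 h2) as [p|[[m [hm l1]]|[m [hm l1]]]].
  - apply p; left; left; auto.
  - exact (tree_lt_irrefl HT (tree_le_lt_trans HT l1 (proj2 (graft_max_above hE h2 hm)))).
  - exact (tree_lt_irrefl HT (tree_le_lt_trans HT l1 (proj2 (graft_max_above hD h1 hm)))).
Qed.

Lemma supp_graft_least G r : Gam G -> is_least G r -> Supp r.
Proof.
  intros hG hr. split; [exact (graft_least_node hG hr)|].
  intros [D [hD [[rD [hrD lt1]] nd]]].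
  destruct (classic (D = G)) as [->|ne].
  - rewrite (least_unique (graft_is_tree hG) hrD hr) in lt1. exact (tree_lt_irrefl HT lt1).
  - destruct (consistent_roots hG hD (fun e => ne (eq_sym e)) hr hrD) as [p|[d|[m [hm le1]]]].
    + apply p. right; right; auto.
    + contradiction.
    + pose proof (proj2 (graft_max_above hG hr hm)) as rm.
      exact (tree_lt_irrefl HT (tree_le_lt_trans HT le1 (tree_lt_trans HT lt1 rm))).
Qed.

Lemma supp_graft_max G m : Gam G -> is_max G m -> Supp m.
Proof.
  intros hG hm. destruct (graft_has_least hG) as [r hr].
  destruct (graft_max_above hG hr hm) as [nm lrm].
  split; auto.
  intros [D [hD [[rD [hrD lt1]] nd]]].
  destruct (classic (D = G)) as [->|ne].
  - apply nd. exists m; split; auto. left; auto.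
  - destruct (consistent_roots hG hD (fun e => ne (eq_sym e)) hr hrD)
      as [p|[[m' [hm' l1]]|[m' [hm' l1]]]].
    + apply p. apply (comparable_of_lt_common HT lrm lt1).
    + apply nd. exists m'. split; auto. right. exact (tree_le_lt_trans HT l1 lrm).
    + assert (m' = m) by (apply (graft_max_eq hG hm' hm); left; right; exact (tree_le_lt_trans HT l1 lt1)).
      subst m'. exact (tree_lt_irrefl HT (tree_le_lt_trans HT l1 lt1)).
Qed.

Lemma supp_above_graft_max G r y : Gam G -> is_least G r -> Supp y -> lt T r y ->
  exists m, is_max G m /\ le T m y.
Proof.
  intros hG hr [ny ne] l. apply NNPP; intro nx. apply ne. exists G. split; auto.
  split; eauto.
Qed.

Lemma supp_not_impl G y : Gam G -> Supp y -> impl G y -> False.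
Proof. intros hG [n _] hi. exact (graft_impl_not_node hG hi n). Qed.

Lemma hybr_node_cases y : nodes H y -> Supp y \/ exists G, Gam G /\ impl G y.
Proof. auto. Qed.
Lemma hybr_node_supp y : Supp y -> nodes H y.
Proof. intros; left; auto. Qed.
Lemma hybr_node_impl G y : Gam G -> impl G y -> nodes H y.
Proof. intros; right; eauto. Qed.

Lemma hybr_lt_iff x y : lt H x y <->
  (Supp x /\ Supp y /\ lt T x y) \/
  (exists G, Gam G /\ impl G x /\ impl G y /\ lt G x y) \/
  (Supp x /\ exists G, Gam G /\ impl G y /\ exists r, is_least G r /\ le T x r) \/
  (exists G, Gam G /\ impl G x /\ Supp y /\ exists m, is_max G m /\ le T m y /\ lt G x m) \/
  (exists D E, Gam D /\ Gam E /\ D <> E /\ impl D x /\ impl E y /\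
     exists rE m, is_least E rE /\ is_max D m /\ le T m rE /\ lt D x m).
Proof. reflexivity. Qed.

Lemma hybr_lt_supp_supp x y : Supp x -> Supp y -> lt T x y -> lt H x y.
Proof. intros; apply hybr_lt_iff; left; auto. Qed.
Lemma hybr_lt_supp_impl x y E r : Supp x -> Gam E -> impl E y -> is_least E r -> le T x r -> lt H x y.
Proof. intros; apply hybr_lt_iff; right; right; left; split; eauto 7. Qed.
Lemma hybr_lt_impl_supp x y D m : Gam D -> impl D x -> Supp y -> is_max D m -> le T m y -> lt D x m ->
  lt H x y.
Proof. intros; apply hybr_lt_iff; right; right; right; left; eauto 8. Qed.
Lemma hybr_lt_impl_same x y G : Gam G -> impl G x -> impl G y -> lt G x y -> lt H x y.
Proof. intros; apply hybr_lt_iff; right; left; eauto. Qed.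
Lemma hybr_lt_impl_impl x y D E rE m : Gam D -> Gam E -> impl D x -> impl E y -> is_least E rE ->
  is_max D m -> le T m rE -> lt D x m -> lt H x y.
Proof.
  intros hD hE ix iy hr hm l1 l2. apply hybr_lt_iff; right; right; right; right.
  exists D, E. split; auto. split; auto. split.
  - intros ->. exact (tree_lt_irrefl HT (tree_le_lt_trans HT l1 (proj2 (graft_max_above hE hr hm)))).
  - split; auto. split; auto. eauto 7.
Qed.

Lemma hybr_lt_supp_inv x y : lt H x y -> Supp y ->
  (Supp x /\ lt T x y) \/ (exists D m, Gam D /\ impl D x /\ is_max D m /\ le T m y /\ lt D x m).
Proof.
  intros h sy. apply hybr_lt_iff in h.
  destruct h as [[a [b c]]|[[G [hG [_ [iy _]]]]|[[_ [G [hG [iy _]]]]|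
                 [[G [hG [ix [_ [m [hm [l1 l2]]]]]]]|[D [E [_ [hE [_ [_ [iy _]]]]]]]]]]].
  - auto.
  - exfalso; exact (supp_not_impl hG sy iy).
  - exfalso; exact (supp_not_impl hG sy iy).
  - right; eauto 8.
  - exfalso; exact (supp_not_impl hE sy iy).
Qed.
Lemma hybr_lt_impl_inv x y E r : lt H x y -> Gam E -> impl E y -> is_least E r ->
  (Supp x /\ le T x r) \/ (impl E x /\ lt E x y) \/
  (exists D m, Gam D /\ impl D x /\ is_max D m /\ le T m r /\ lt D x m).
Proof.
  intros h hE iy hr. apply hybr_lt_iff in h.
  destruct h as [[a [b c]]|[[G [hG [ix [iy' l]]]]|[[sx [G [hG [iy' [r' [hr' l]]]]]]|
                 [[G [hG [ix [sy _]]]]|[D [E' [hD [hE' [ne [ix [iy' [rE [m [hr' [hm [l1 l2]]]]]]]]]]]]]]]].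
  - exfalso; exact (supp_not_impl hE b iy).
  - rewrite <- (impl_graft_unique hG hE iy' iy). auto.
  - left. split; auto. assert (G = E) by (apply (impl_graft_unique hG hE iy' iy)). subst G.
    rewrite (least_unique (graft_is_tree hE) hr hr'); auto.
  - exfalso; exact (supp_not_impl hE sy iy).
  - right; right. exists D, m.
    assert (E' = E) by (apply (impl_graft_unique hE' hE iy' iy)). subst E'.
    rewrite (least_unique (graft_is_tree hE) hr hr'). tauto.
Qed.

Lemma hybr_lt_nodes x y : lt H x y -> nodes H x /\ nodes H y.
Proof.
  intros h. apply hybr_lt_iff in h.
  destruct h as [[a [b c]]|[[G [hG [ix [iy _]]]]|[[sx [G [hG [iy _]]]]|
                 [[G [hG [ix [sy _]]]]|[D [E [hD [hE [_ [ix [iy _]]]]]]]]]]].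
  all: split; first [apply hybr_node_supp; assumption | eapply hybr_node_impl; [|eassumption]; eassumption].
Qed.

Lemma hybr_lt_irrefl x : ~ lt H x x.
Proof.
  intros h. apply hybr_lt_iff in h.
  destruct h as [[a [b c]]|[[G [hG [ix [iy l]]]]|[[sx [G [hG [iy _]]]]|
                 [[G [hG [ix [sy _]]]]|[D [E [hD [hE [ne [ix [iy _]]]]]]]]]]].
  - exact (tree_lt_irrefl HT c).
  - exact (tree_lt_irrefl (graft_is_tree hG) l).
  - exact (supp_not_impl hG sx iy).
  - exact (supp_not_impl hG sy ix).
  - exact (ne (impl_graft_unique hD hE ix iy)).
Qed.

Lemma hybr_lt_trans_supp x y z : lt H x y -> lt H y z -> Supp y -> lt H x z.
Proof.
  intros hxy hyz sy.
  destruct (hybr_lt_supp_inv hxy sy) as [[sx l1]|[D [m [hD [ix [hm [l1 l2]]]]]]];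
  destruct (hybr_node_cases (proj2 (hybr_lt_nodes hyz))) as [sz|[E [hE iz]]].
  - destruct (hybr_lt_supp_inv hyz sz) as [[_ l3]|[D' [_ [hD' [iy' _]]]]];
      [|exfalso; exact (supp_not_impl hD' sy iy')].
    exact (hybr_lt_supp_supp sx sz (tree_lt_trans HT l1 l3)).
  - destruct (graft_has_least hE) as [r hr].
    destruct (hybr_lt_impl_inv hyz hE iz hr) as [[_ l3]|[[iy' _]|[D' [_ [hD' [iy' _]]]]]];
      [|exfalso; exact (supp_not_impl hE sy iy')|exfalso; exact (supp_not_impl hD' sy iy')].
    exact (hybr_lt_supp_impl sx hE iz hr (or_intror (tree_lt_le_trans HT l1 l3))).
  - destruct (hybr_lt_supp_inv hyz sz) as [[_ l3]|[D' [_ [hD' [iy' _]]]]];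
      [|exfalso; exact (supp_not_impl hD' sy iy')].
    exact (hybr_lt_impl_supp hD ix sz hm (tree_le_trans HT l1 (or_intror l3)) l2).
  - destruct (graft_has_least hE) as [r hr].
    destruct (hybr_lt_impl_inv hyz hE iz hr) as [[_ l3]|[[iy' _]|[D' [_ [hD' [iy' _]]]]]];
      [|exfalso; exact (supp_not_impl hE sy iy')|exfalso; exact (supp_not_impl hD' sy iy')].
    exact (hybr_lt_impl_impl hD hE ix iz hr hm (tree_le_trans HT l1 l3) l2).
Qed.

Lemma hybr_lt_impl_src_inv y z E : lt H y z -> Gam E -> impl E y ->
  (impl E z /\ lt E y z) \/
  (exists m, is_max E m /\ lt E y m /\
     ((Supp z /\ le T m z) \/ exists E2 r2, Gam E2 /\ impl E2 z /\ is_least E2 r2 /\ le T m r2)).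
Proof.
  intros h hE iy. apply hybr_lt_iff in h.
  destruct h as [[sy _]|[[G [hG [iy' [iz l]]]]|[[sy _]|
                 [[G [hG [iy' [sz [m [hm [l1 l2]]]]]]]|
                  [D [E2 [hD [hE2 [_ [iy' [iz [r2 [m [hr2 [hm [l1 l2]]]]]]]]]]]]]]]].
  - exfalso; exact (supp_not_impl hE sy iy).
  - rewrite <- (impl_graft_unique hG hE iy' iy). auto.
  - exfalso; exact (supp_not_impl hE sy iy).
  - rewrite <- (impl_graft_unique hG hE iy' iy). right. exists m. auto.
  - rewrite <- (impl_graft_unique hD hE iy' iy). right. exists m. split; auto. split; auto.
    right. exists E2, r2. auto.
Qed.

Lemma hybr_lt_trans_impl x y z E : lt H x y -> lt H y z -> Gam E -> impl E y -> lt H x z.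
Proof.
  intros hxy hyz hE iy. destruct (graft_has_least hE) as [r hr]. pose proof (graft_is_tree hE) as tE.
  destruct (hybr_lt_impl_src_inv hyz hE iy)
    as [[iz l3]|[m' [hm' [l3 [[sz l4]|[E2 [r2 [hE2 [iz [hr2 l4]]]]]]]]]];
  [|pose proof (proj2 (graft_max_above hE hr hm')) as rm'..];
  destruct (hybr_lt_impl_inv hxy hE iy hr) as [[sx l1]|[[ix l1]|[D [m [hD [ix [hm [l1 l2]]]]]]]].
  - exact (hybr_lt_supp_impl sx hE iz hr l1).
  - exact (hybr_lt_impl_same hE ix iz (tree_lt_trans tE l1 l3)).
  - exact (hybr_lt_impl_impl hD hE ix iz hr hm l1 l2).
  - exact (hybr_lt_supp_supp sx sz (tree_le_lt_le_trans HT l1 rm' l4)).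
  - exact (hybr_lt_impl_supp hE ix sz hm' l4 (tree_lt_trans tE l1 l3)).
  - exact (hybr_lt_impl_supp hD ix sz hm (or_intror (tree_le_lt_le_trans HT l1 rm' l4)) l2).
  - exact (hybr_lt_supp_impl sx hE2 iz hr2 (or_intror (tree_le_lt_le_trans HT l1 rm' l4))).
  - exact (hybr_lt_impl_impl hE hE2 ix iz hr2 hm' l4 (tree_lt_trans tE l1 l3)).
  - exact (hybr_lt_impl_impl hD hE2 ix iz hr2 hm (or_intror (tree_le_lt_le_trans HT l1 rm' l4)) l2).
Qed.

Lemma hybr_lt_trans x y z : lt H x y -> lt H y z -> lt H x z.
Proof.
  intros hxy hyz. destruct (hybr_node_cases (proj2 (hybr_lt_nodes hxy))) as [sy|[E [hE iy]]].
  - exact (hybr_lt_trans_supp hxy hyz sy).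
  - exact (hybr_lt_trans_impl hxy hyz hE iy).
Qed.

Definition hangs_below (v a : N) : Prop := (Supp a /\ le T a v) \/
  (exists D m, Gam D /\ impl D a /\ is_max D m /\ lt D a m /\ le T m v).

Lemma hybr_comparable_supp_impl v a b D m : Supp a -> le T a v -> Gam D -> impl D b -> is_max D m ->
  lt D b m -> le T m v -> comparable H a b.
Proof.
  intros sa lav hD ib hm lbm lmv.
  destruct (graft_has_least hD) as [rD hrD]. pose proof (proj2 (graft_max_above hD hrD hm)) as rDm.
  destruct (comparable_of_le_common HT lav (tree_le_trans HT (or_intror rDm) lmv)) as [h|[e|h]].
  - left; right. exact (hybr_lt_supp_impl sa hD ib hrD h).
  - left; right. subst. apply (hybr_lt_supp_impl sa hD ib hrD). left; auto.
  - destruct (supp_above_graft_max hD hrD sa h) as [m' [hm' lm'a]].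
    assert (m' = m).
    { apply (graft_max_eq hD hm' hm). exact (comparable_of_le_common HT (tree_le_trans HT lm'a lav) lmv). }
    subst m'. right; right. exact (hybr_lt_impl_supp hD ib sa hm lm'a lbm).
Qed.

Lemma hybr_lt_impl_impl_of_roots v a b D E m1 m2 rD rE : Gam D -> Gam E -> impl D a -> impl E b ->
  is_max D m1 -> is_max E m2 -> lt D a m1 -> le T m1 v -> le T m2 v ->
  is_least D rD -> is_least E rE -> lt T rD rE -> lt H a b.
Proof.
  intros hD hE ia ib hm1 hm2 l1 l2 l3 hrD hrE lr.
  destruct (supp_above_graft_max hD hrD (supp_graft_least hE hrE) lr) as [m' [hm' lm']].
  pose proof (proj2 (graft_max_above hE hrE hm2)) as rEm.
  assert (m' = m1).
  { apply (graft_max_eq hD hm' hm1). apply (comparable_of_le_common HT (x := v)); auto.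
    exact (or_intror (tree_le_lt_le_trans HT lm' rEm l3)). }
  subst m'. exact (hybr_lt_impl_impl hD hE ia ib hrE hm1 lm' l1).
Qed.

Lemma hangs_below_comparable v a b : hangs_below v a -> hangs_below v b -> comparable H a b.
Proof.
  intros [[sa la]|[D [m1 [hD [ia [hm1 [l1 l1']]]]]]] [[sb lb]|[E [m2 [hE [ib [hm2 [l2 l2']]]]]]].
  - destruct (comparable_of_le_common HT la lb) as [[e|h]|[e|h]].
    + left; left; auto.
    + left; right; apply hybr_lt_supp_supp; auto.
    + right; left; auto.
    + right; right; apply hybr_lt_supp_supp; auto.
  - exact (hybr_comparable_supp_impl sa la hE ib hm2 l2 l2').
  - apply comparable_sym. exact (hybr_comparable_supp_impl sb lb hD ia hm1 l1 l1').
  - destruct (classic (D = E)) as [<-|ne].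
    + assert (m2 = m1) by (apply (graft_max_eq hD hm2 hm1); exact (comparable_of_le_common HT l2' l1')).
      subst m2.
      destruct (comparable_of_lt_common (graft_is_tree hD) l1 l2) as [[e|h]|[e|h]].
      * left; left; auto.
      * left; right; exact (hybr_lt_impl_same hD ia ib h).
      * right; left; auto.
      * right; right; exact (hybr_lt_impl_same hD ib ia h).
    + destruct (graft_has_least hD) as [rD hrD]. destruct (graft_has_least hE) as [rE hrE].
      pose proof (proj2 (graft_max_above hD hrD hm1)) as r1.
      pose proof (proj2 (graft_max_above hE hrE hm2)) as r2.
      destruct (comparable_of_le_common HT (tree_le_trans HT (or_intror r1) l1')
                  (tree_le_trans HT (or_intror r2) l2')) as [[e|h]|[e|h]];
        try (subst rE; exfalso; exact (ne (graft_eq_of_least hD hE hrD hrE))).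
      * left; right. exact (hybr_lt_impl_impl_of_roots hD hE ia ib hm1 hm2 l1 l1' l2' hrD hrE h).
      * right; right. exact (hybr_lt_impl_impl_of_roots hE hD ib ia hm2 hm1 l2 l2' l1' hrE hrD h).
Qed.

Lemma hangs_below_of_hybr_lt a x : lt H a x -> Supp x -> hangs_below x a.
Proof.
  intros h sx. destruct (hybr_lt_supp_inv h sx) as [[sa l]|[D [m [hD [ia [hm [l1 l2]]]]]]].
  - left; split; auto; right; auto.
  - right; eauto 8.
Qed.

Lemma hybr_lt_impl_of_hangs_below_root r G a b : Gam G -> is_least G r -> impl G a ->
  hangs_below r b -> lt H b a.
Proof.
  intros hG hr ia [[sb lb]|[D [m [hD [ib [hm [l1 l2]]]]]]].
  - exact (hybr_lt_supp_impl sb hG ia hr lb).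
  - exact (hybr_lt_impl_impl hD hG ib ia hr hm l2 l1).
Qed.

Lemma hybr_pred_comparable a b x : lt H a x -> lt H b x -> comparable H a b.
Proof.
  intros ha hb. destruct (hybr_node_cases (proj2 (hybr_lt_nodes ha))) as [sx|[G [hG ix]]].
  - exact (hangs_below_comparable (hangs_below_of_hybr_lt ha sx) (hangs_below_of_hybr_lt hb sx)).
  - destruct (graft_has_least hG) as [r hr].
    assert (K : forall c, lt H c x -> hangs_below r c \/ (impl G c /\ lt G c x)).
    { intros c hc.
      destruct (hybr_lt_impl_inv hc hG ix hr) as [[s l]|[[i l]|[D [m [hD [i [hm [l1 l2]]]]]]]].
      - left; left; auto.
      - right; auto.
      - left; right; eauto 8. }
    destruct (K a ha) as [A|[ia la]]; destruct (K b hb) as [B|[ib lb]].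
    + exact (hangs_below_comparable A B).
    + left; right. exact (hybr_lt_impl_of_hangs_below_root hG hr ib A).
    + right; right. exact (hybr_lt_impl_of_hangs_below_root hG hr ia B).
    + destruct (comparable_of_lt_common (graft_is_tree hG) la lb) as [[e|h]|[e|h]].
      * left; left; auto.
      * left; right; exact (hybr_lt_impl_same hG ia ib h).
      * right; left; auto.
      * right; right; exact (hybr_lt_impl_same hG ib ia h).
Qed.

(* Accessibility is proved by induction on the depth in [T] of a supported node, which also
   serves the implants of the graft rooted there. *)
Definition acc_at (v : N) : Prop :=
  (Supp v -> Acc (lt H) v) /\ (forall G y, Gam G -> is_least G v -> impl G y -> Acc (lt H) y).

Lemma acc_supp v : Supp v -> (forall w, nodes T w -> length (f w) < length (f v) -> acc_at w) ->
  Acc (lt H) v.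
Proof.
  intros sv IH. constructor. intros a ha.
  destruct (hybr_lt_supp_inv ha sv) as [[sa l]|[D [m [hD [ia [hm [l1 l2]]]]]]].
  - apply (IH a (proj1 (tree_lt_nodes HT l)) (depth_lt_of_lt HT flt l)); auto.
  - destruct (graft_has_least hD) as [rD hrD].
    pose proof (tree_lt_le_trans HT (proj2 (graft_max_above hD hrD hm)) l1) as l3.
    exact (proj2 (IH rD (proj1 (tree_lt_nodes HT l3)) (depth_lt_of_lt HT flt l3)) D a hD hrD ia).
Qed.

Lemma acc_impl G v : Gam G -> is_least G v ->
  (forall w, nodes T w -> length (f w) < length (f v) -> acc_at w) ->
  forall y, impl G y -> Acc (lt H) y.
Proof.
  intros hG hv IH y iy.
  pose proof (acc_supp (supp_graft_least hG hv) IH) as Av.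
  induction (tree_acc (graft_is_tree hG) (proj1 iy)) as [y _ IHy].
  constructor. intros a ha.
  destruct (hybr_lt_impl_inv ha hG iy hv) as [[sa [e|l]]|[[ia l]|[D [m [hD [ia [hm [l1 l2]]]]]]]].
  - subst; auto.
  - apply (IH a (proj1 (tree_lt_nodes HT l)) (depth_lt_of_lt HT flt l)); auto.
  - apply IHy; auto.
  - destruct (graft_has_least hD) as [rD hrD].
    pose proof (tree_lt_le_trans HT (proj2 (graft_max_above hD hrD hm)) l1) as l3.
    exact (proj2 (IH rD (proj1 (tree_lt_nodes HT l3)) (depth_lt_of_lt HT flt l3)) D a hD hrD ia).
Qed.

Lemma acc_at_depth n : forall v, nodes T v -> length (f v) < n -> acc_at v.
Proof.
  induction n; intros v nv lv; [lia|].
  assert (IH : forall w, nodes T w -> length (f w) < length (f v) -> acc_at w)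
    by (intros; apply IHn; auto; lia).
  split.
  - intros sv. exact (acc_supp sv IH).
  - intros G y hG hv iy. exact (acc_impl hG hv IH iy).
Qed.

Lemma hybr_acc y : nodes H y -> Acc (lt H) y.
Proof.
  intros ny. destruct (hybr_node_cases ny) as [sy|[G [hG iy]]].
  - exact (proj1 (acc_at_depth (proj1 sy) (Nat.lt_succ_diag_r _)) sy).
  - destruct (graft_has_least hG) as [r hr].
    exact (proj2 (acc_at_depth (graft_least_node hG hr) (Nat.lt_succ_diag_r _)) G y hG hr iy).
Qed.

Lemma hybr_is_tree : is_tree H.
Proof.
  split; [exact hybr_lt_nodes|]. split; [exact hybr_lt_irrefl|]. split; [exact hybr_lt_trans|].
  intros x nx. split.
  - split.
    + intros y hy. exact (proj1 (hybr_lt_nodes hy)).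
    + intros a b ha hb. exact (hybr_pred_comparable ha hb).
  - intros Sm hS [y0 hy0].
    destruct (acc_has_minimal (hybr_acc (proj1 (hybr_lt_nodes (hS y0 hy0)))) hy0) as [m [sm mm]].
    exists m. split; auto. intros z sz.
    destruct (hybr_pred_comparable (hS m sm) (hS z sz)) as [h|[e|h]]; auto.
    + left; auto.
    + exfalso; exact (mm z sz h).
Qed.

Lemma supp_least : Supp rT.
Proof.
  split; [exact (proj1 HrT)|]. intros [D [hD [[rD [hrD l]] _]]].
  destruct (proj2 HrT rD (proj1 (tree_lt_nodes HT l))) as [e|l'].
  - subst; exact (tree_lt_irrefl HT l).
  - exact (tree_lt_asym HT l l').
Qed.

Lemma hybr_least : is_least H rT.
Proof.
  split; [apply hybr_node_supp, supp_least|]. intros x nx.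
  destruct (hybr_node_cases nx) as [sx|[G [hG ix]]].
  - destruct (proj2 HrT x (proj1 sx)) as [e|l];
      [left; auto|right; apply hybr_lt_supp_supp; auto; apply supp_least].
  - destruct (graft_has_least hG) as [r hr]. right.
    exact (hybr_lt_supp_impl supp_least hG ix hr (proj2 HrT r (graft_least_node hG hr))).
Qed.

Lemma hybr_node_graft G y : Gam G -> nodes G y -> nodes H y.
Proof.
  intros hG ny. destruct (graft_has_least hG) as [r hr].
  destruct (graft_node_cases (graft_is_tree hG) hr ny) as [->|[m|i]].
  - apply hybr_node_supp; exact (supp_graft_least hG hr).
  - apply hybr_node_supp; exact (supp_graft_max hG m).
  - exact (hybr_node_impl hG i).
Qed.

Lemma hybr_lt_of_graft_lt G a b : Gam G -> lt G a b -> lt H a b.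
Proof.
  intros hG l. destruct (graft_has_least hG) as [r hr]. pose proof (graft_is_tree hG) as tG.
  destruct (tree_lt_nodes tG l) as [na nb].
  destruct (graft_node_cases tG hr na) as [->|[ma|ia]].
  - destruct (graft_node_cases tG hr nb) as [->|[mb|ib]].
    + exfalso; exact (tree_lt_irrefl tG l).
    + exact (hybr_lt_supp_supp (supp_graft_least hG hr) (supp_graft_max hG mb)
               (proj2 (graft_max_above hG hr mb))).
    + exact (hybr_lt_supp_impl (supp_graft_least hG hr) hG ib hr (or_introl eq_refl)).
  - exfalso. apply (proj2 ma). eauto.
  - destruct (graft_node_cases tG hr nb) as [->|[mb|ib]].
    + exfalso. destruct (proj2 hr a na) as [e|l'].
      * subst; exact (tree_lt_irrefl tG l).
      * exact (tree_lt_asym tG l l').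
    + exact (hybr_lt_impl_supp hG ia (supp_graft_max hG mb) mb (or_introl eq_refl) l).
    + exact (hybr_lt_impl_same hG ia ib l).
Qed.

Lemma graft_max_not_hybr_lt G m b : Gam G -> is_max G m -> nodes G b -> ~ lt H m b.
Proof.
  intros hG hm nb h. destruct (graft_has_least hG) as [r hr].
  pose proof (supp_graft_max hG hm) as sm. pose proof (proj2 (graft_max_above hG hr hm)) as rm.
  destruct (graft_node_cases (graft_is_tree hG) hr nb) as [->|[mb|ib]].
  - destruct (hybr_lt_supp_inv h (supp_graft_least hG hr)) as [[_ l]|[D [_ [hD [im _]]]]].
    + exact (tree_lt_asym HT l rm).
    + exact (supp_not_impl hD sm im).
  - destruct (hybr_lt_supp_inv h (supp_graft_max hG mb)) as [[_ l]|[D [_ [hD [im _]]]]].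
    + assert (m = b) by (apply (graft_max_eq hG hm mb); left; right; auto).
      subst; exact (tree_lt_irrefl HT l).
    + exact (supp_not_impl hD sm im).
  - destruct (hybr_lt_impl_inv h hG ib hr) as [[_ l]|[[im _]|[D [_ [hD [im _]]]]]].
    + exact (tree_lt_irrefl HT (tree_lt_le_trans HT rm l)).
    + exact (supp_not_impl hG sm im).
    + exact (supp_not_impl hD sm im).
Qed.

Lemma graft_lt_of_hybr_lt_impl G a b : Gam G -> impl G a -> nodes G b -> lt H a b -> lt G a b.
Proof.
  intros hG ia nb h. destruct (graft_has_least hG) as [r hr].
  assert (below_root : forall D m, Gam D -> impl D a -> is_max D m -> le T m r -> False).
  { intros D m hD ia' hm l. rewrite (impl_graft_unique hD hG ia' ia) in hm.
    exact (tree_lt_irrefl HT (tree_lt_le_trans HT (proj2 (graft_max_above hG hr hm)) l)). }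
  destruct (graft_node_cases (graft_is_tree hG) hr nb) as [->|[mb|ib]].
  - destruct (hybr_lt_supp_inv h (supp_graft_least hG hr)) as [[sa _]|[D [m [hD [ia' [hm [l _]]]]]]].
    + exfalso; exact (supp_not_impl hG sa ia).
    + exfalso; exact (below_root D m hD ia' hm l).
  - destruct (hybr_lt_supp_inv h (supp_graft_max hG mb)) as [[sa _]|[D [m [hD [ia' [hm [l1 l2]]]]]]].
    + exfalso; exact (supp_not_impl hG sa ia).
    + rewrite (impl_graft_unique hD hG ia' ia) in hm, l2.
      rewrite <- (graft_max_eq hG hm mb (or_introl l1)). exact l2.
  - destruct (hybr_lt_impl_inv h hG ib hr) as [[sa _]|[[_ l]|[D [m [hD [ia' [hm [l1 _]]]]]]]].
    + exfalso; exact (supp_not_impl hG sa ia).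
    + exact l.
    + exfalso; exact (below_root D m hD ia' hm l1).
Qed.

Lemma hybr_lt_graft_iff G a b : Gam G -> nodes G a -> nodes G b -> (lt H a b <-> lt G a b).
Proof.
  intros hG na nb. split; [|exact (hybr_lt_of_graft_lt hG)].
  intros h. destruct (graft_has_least hG) as [r hr].
  destruct (graft_node_cases (graft_is_tree hG) hr na) as [->|[ma|ia]].
  - destruct (proj2 hr b nb) as [e|l]; auto. subst; exfalso; exact (hybr_lt_irrefl h).
  - exfalso; exact (graft_max_not_hybr_lt hG ma nb h).
  - exact (graft_lt_of_hybr_lt_impl hG ia nb h).
Qed.

Lemma hybr_lt_graft_step G r x s : Gam G -> is_least G r -> (x = r \/ impl G x) -> lt H x s ->
  exists c, nodes G c /\ lt H x c /\ le H c s.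
Proof.
  intros hG hr hx l. pose proof (supp_graft_least hG hr) as sr.
  assert (via_max : forall m, is_max G m -> lt H x m -> le H m s -> exists c, nodes G c /\ lt H x c /\ le H c s)
    by (intros m hm; exists m; split; [exact (proj1 hm)|]; auto).
  assert (max_le : forall m, is_max G m -> le T m s -> Supp s -> le H m s).
  { intros m hm [e|lm] ss; [left; auto|right; apply hybr_lt_supp_supp; auto; exact (supp_graft_max hG hm)]. }
  assert (root_max : forall m, is_max G m -> lt H r m).
  { intros m hm. exact (hybr_lt_supp_supp sr (supp_graft_max hG hm) (proj2 (graft_max_above hG hr hm))). }
  destruct (hybr_node_cases (proj2 (hybr_lt_nodes l))) as [ss|[E [hE is]]].
  - destruct (hybr_lt_supp_inv l ss) as [[sx l1]|[D [m [hD [ix [hm [l1 l2]]]]]]].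
    + destruct hx as [->|ix]; [|exfalso; exact (supp_not_impl hG sx ix)].
      destruct (supp_above_graft_max hG hr ss l1) as [m [hm lm]].
      exact (via_max m hm (root_max m hm) (max_le m hm lm ss)).
    + destruct hx as [->|ix']; [exfalso; exact (supp_not_impl hD sr ix)|].
      rewrite (impl_graft_unique hD hG ix ix') in hm, l2.
      exact (via_max m hm (hybr_lt_of_graft_lt hG l2) (max_le m hm l1 ss)).
  - destruct (graft_has_least hE) as [rE hrE].
    destruct (hybr_lt_impl_inv l hE is hrE) as [[sx l1]|[[ix l1]|[D [m [hD [ix [hm [l1 l2]]]]]]]].
    + destruct hx as [->|ix]; [|exfalso; exact (supp_not_impl hG sx ix)].
      destruct (classic (E = G)) as [->|ne].
      * exists s. split; [exact (proj1 is)|]. split; auto. left; auto.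
      * destruct l1 as [e|l1].
        -- subst rE. exfalso; apply ne. exact (graft_eq_of_least hE hG hrE hr).
        -- destruct (supp_above_graft_max hG hr (supp_graft_least hE hrE) l1) as [m [hm lm]].
           exact (via_max m hm (root_max m hm) (or_intror (hybr_lt_supp_impl (supp_graft_max hG hm) hE is hrE lm))).
    + destruct hx as [->|ix']; [exfalso; exact (supp_not_impl hE sr ix)|].
      rewrite (impl_graft_unique hE hG ix ix') in is.
      exists s. split; [exact (proj1 is)|]. split; auto. left; auto.
    + destruct hx as [->|ix']; [exfalso; exact (supp_not_impl hD sr ix)|].
      rewrite (impl_graft_unique hD hG ix ix') in hm, l2.
      exact (via_max m hm (hybr_lt_of_graft_lt hG l2)
               (or_intror (hybr_lt_supp_impl (supp_graft_max hG hm) hE is hrE l1))).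
Qed.

Lemma hybr_sons_graft G r x s : Gam G -> is_least G r -> (x = r \/ impl G x) ->
  (sons H x s <-> sons G x s).
Proof.
  intros hG hr hx.
  assert (nx : nodes G x) by (destruct hx as [->|i]; [exact (proj1 hr)|exact (proj1 i)]).
  split.
  - intros [ns [l nb]].
    destruct (hybr_lt_graft_step hG hr hx l) as [c [nc [l1 [e|l2]]]].
    + subst c. split; auto. split; [apply (hybr_lt_graft_iff hG nx nc); auto|].
      intros [z [a b]]. apply nb. exists z.
      pose proof (proj2 (tree_lt_nodes (graft_is_tree hG) a)) as nz.
      split; [apply (hybr_lt_graft_iff hG nx nz)|apply (hybr_lt_graft_iff hG nz nc)]; auto.
    + exfalso. apply nb. eauto.
  - intros [ns [l nb]]. split; [exact (hybr_node_graft hG ns)|].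
    split; [apply (hybr_lt_graft_iff hG nx ns); auto|].
    intros [z [a b]]. destruct (hybr_lt_graft_step hG hr hx a) as [c [nc [l1 l2]]].
    assert (l3 : lt H c s) by (destruct l2 as [<-|l2]; auto; exact (hybr_lt_trans l2 b)).
    apply nb. exists c. split; [apply (hybr_lt_graft_iff hG nx nc)|apply (hybr_lt_graft_iff hG nc ns)]; auto.
Qed.

Definition not_graft_root (x : N) : Prop := forall G, Gam G -> ~ is_least G x.

Lemma supp_son_supp x s : Supp x -> not_graft_root x -> sons T x s -> Supp s.
Proof.
  intros sx nr [ns [l nb]]. split; auto.
  intros [D [hD [[rD [hrD l1]] nd]]].
  destruct (comparable_of_lt_common HT l1 l) as [[e|h]|[e|h]];
    try (subst; exact (nr D hD hrD)).
  - destruct (supp_above_graft_max hD hrD sx h) as [m [hm lm]]. apply nd. exists m. split; auto.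
    right. exact (tree_le_lt_trans HT lm l).
  - apply nb. eauto.
Qed.

Lemma hybr_sons_supp x s : Supp x -> not_graft_root x -> (sons H x s <-> sons T x s).
Proof.
  intros sx nr. split.
  - intros [ns [l nb]].
    destruct (hybr_node_cases ns) as [ss|[E [hE is]]].
    + destruct (hybr_lt_supp_inv l ss) as [[_ l1]|[D [_ [hD [ix _]]]]];
        [|exfalso; exact (supp_not_impl hD sx ix)].
      split; [exact (proj1 ss)|]. split; auto.
      intros [z [a b]]. destruct (son_le_of_lt HT a) as [c [hc lc]].
      pose proof (supp_son_supp sx nr hc) as sc. apply nb. exists c. split.
      * exact (hybr_lt_supp_supp sx sc (son_lt hc)).
      * exact (hybr_lt_supp_supp sc ss (tree_le_lt_trans HT lc b)).
    + exfalso. destruct (graft_has_least hE) as [rE hrE].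
      destruct (hybr_lt_impl_inv l hE is hrE) as [[_ [e|l1]]|[[ix _]|[D [_ [hD [ix _]]]]]].
      * subst; exact (nr E hE hrE).
      * pose proof (supp_graft_least hE hrE) as sr. apply nb. exists rE. split.
        -- exact (hybr_lt_supp_supp sx sr l1).
        -- exact (hybr_lt_supp_impl sr hE is hrE (or_introl eq_refl)).
      * exact (supp_not_impl hE sx ix).
      * exact (supp_not_impl hD sx ix).
  - intros hs. pose proof (supp_son_supp sx nr hs) as ss. destruct hs as [ns [l nb]].
    split; [apply hybr_node_supp; auto|]. split; [apply hybr_lt_supp_supp; auto|].
    intros [z [a b]]. destruct (hybr_node_cases (proj2 (hybr_lt_nodes a))) as [sz|[G [hG iz]]].
    + destruct (hybr_lt_supp_inv a sz) as [[_ l1]|[D [_ [hD [ix _]]]]]; [|exact (supp_not_impl hD sx ix)].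
      destruct (hybr_lt_supp_inv b ss) as [[_ l2]|[D [_ [hD [iz _]]]]]; [|exact (supp_not_impl hD sz iz)].
      apply nb; eauto.
    + destruct (graft_has_least hG) as [r hr].
      destruct (hybr_lt_impl_inv a hG iz hr) as [[_ l1]|[[ix _]|[D [_ [hD [ix _]]]]]];
        [|exact (supp_not_impl hG sx ix)|exact (supp_not_impl hD sx ix)].
      destruct (hybr_lt_supp_inv b ss) as [[sz _]|[D [m [hD [iz' [hm [l2 _]]]]]]];
        [exact (supp_not_impl hG sz iz)|].
      rewrite (impl_graft_unique hD hG iz' iz) in hm.
      destruct l1 as [e|l1].
      * subst; exact (nr G hG hr).
      * apply nb. exists r. split; auto.
        exact (tree_lt_le_trans HT (proj2 (graft_max_above hG hr hm)) l2).
Qed.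

Lemma hybr_node_kinds x : nodes H x ->
  (Supp x /\ not_graft_root x) \/ (exists G, Gam G /\ is_least G x) \/ (exists G, Gam G /\ impl G x).
Proof.
  intros nx. destruct (hybr_node_cases nx) as [sx|i]; auto.
  destruct (classic (not_graft_root x)) as [nr|nr]; auto.
  right; left. apply NNPP; intro ne. apply nr. intros G hG hl. apply ne; eauto.
Qed.

Lemma hybr_sons_enum x : nodes H x -> exists e : nat -> N, (forall i j, e i = e j -> i = j) /\
  (forall s, sons H x s <-> exists i, e i = s).
Proof.
  intros nx. destruct (hybr_node_kinds nx) as [[sx nr]|[[G [hG hr]]|[G [hG ix]]]].
  - exists (fun i => node_at fsurj (f x ++ [i])). split.
    + intros i j e. exact (baire_son_index_inj e).
    + intros s. rewrite (hybr_sons_supp s sx nr). exact (baire_sons_iff HT finj fsurj flt s (proj1 sx)).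
  - destruct (proj1 (Hbr hG) x (proj1 hr) (graft_least_not_max hG hr)) as [e [ei es]].
    exists e. split; auto. intros s. rewrite (hybr_sons_graft s hG hr (or_introl eq_refl)). auto.
  - destruct (graft_has_least hG) as [r hr].
    destruct (proj1 (Hbr hG) x (proj1 ix) (proj2 (proj2 ix))) as [e [ei es]].
    exists e. split; auto. intros s. rewrite (hybr_sons_graft s hG hr (or_intror ix)). auto.
Qed.

Lemma hybr_parent_graft G y : Gam G -> nodes G y -> (forall r, is_least G r -> y <> r) ->
  exists p, sons H p y.
Proof.
  intros hG ny nr. destruct (graft_has_least hG) as [r hr].
  assert (l : lt G r y).
  { destruct (proj2 hr y ny) as [e|l]; auto. exfalso; exact (nr r hr (eq_sym e)). }
  destruct (parent_of_height_le_omega (graft_is_tree hG) (proj2 (proj2 (Hbr hG))) l) as [p hp].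
  exists p. apply (hybr_sons_graft y hG hr (x := p)); auto.
  destruct (graft_node_cases (graft_is_tree hG) hr (proj1 (tree_lt_nodes (graft_is_tree hG) (son_lt hp))))
    as [e|[m|i]]; auto.
  exfalso. apply (proj2 m). exists y. exact (son_lt hp).
Qed.

Lemma hybr_parent y : nodes H y -> y <> rT -> exists p, sons H p y.
Proof.
  intros ny nr. destruct (hybr_node_cases ny) as [sy|[G [hG iy]]].
  - destruct (baire_parent HT finj fsurj flt HrT (proj1 sy) nr) as [p hp].
    pose proof hp as [_ [lpy nb]].
    assert (via_max : forall D m, Gam D -> is_max D m -> lt T p m -> le T m y -> exists p, sons H p y).
    { intros D m hD hm l1 [e|l2].
      - subst m. apply (hybr_parent_graft hD (proj1 hm)). intros r hr e; subst.
        exact (graft_least_not_max hD hr hm).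
      - exfalso; apply nb; eauto. }
    destruct (classic (Supp p)) as [sp|nsp].
    + destruct (classic (not_graft_root p)) as [npr|npr].
      * exists p. apply hybr_sons_supp; auto.
      * assert (exists G, Gam G /\ is_least G p) as [G [hG hr]].
        { apply NNPP; intro ne. apply npr. intros G hG hl. apply ne; eauto. }
        destruct (supp_above_graft_max hG hr sy lpy) as [m [hm lm]].
        exact (via_max G m hG hm (proj2 (graft_max_above hG hr hm)) lm).
    + assert (exists D, Gam D /\ expl T D p) as [D [hD [[rD [hrD l1]] nd]]].
      { apply NNPP; intro ne. apply nsp. split; [exact (proj1 (tree_lt_nodes HT lpy))|auto]. }
      destruct (supp_above_graft_max hD hrD sy (tree_lt_trans HT l1 lpy)) as [m [hm lm]].
      destruct (comparable_of_le_common HT lm (or_intror lpy)) as [h|[e|h]].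
      * exfalso; apply nd; exists m; auto.
      * subst; exfalso; apply nd; exists m; split; auto; left; auto.
      * exact (via_max D m hD hm h lm).
  - apply (hybr_parent_graft hG (proj1 iy)). exact (proj1 (proj2 iy)).
Qed.

Lemma hybr_iso_baire : iso_baire_tree H.
Proof.
  assert (ex : forall x, exists e : nat -> N, nodes H x -> (forall i j, e i = e j -> i = j) /\
    (forall s, sons H x s <-> exists i, e i = s)).
  { intros x. destruct (classic (nodes H x)) as [nx|nx].
    - destruct (hybr_sons_enum nx) as [e he]; eauto.
    - exists (fun _ => x). intros; contradiction. }
  set (E := fun x => proj1_sig (constructive_indefinite_description _ (ex x))).
  apply (iso_baire_tree_of_sons_enum hybr_is_tree hybr_least (E := E)).
  - intros x nx. unfold E. destruct (constructive_indefinite_description _ (ex x)); simpl; auto.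
  - exact hybr_parent.
Qed.

Lemma supp_lt_of_hybr_lt a b : Supp a -> Supp b -> lt H a b -> lt T a b.
Proof.
  intros sa sb l. destruct (hybr_lt_supp_inv l sb) as [[_ l1]|[D [_ [hD [ia _]]]]]; auto.
  exfalso; exact (supp_not_impl hD sa ia).
Qed.

Lemma supp_comparable_of_hybr a b : Supp a -> Supp b -> comparable H a b -> comparable T a b.
Proof.
  intros sa sb [[e|l]|[e|l]].
  - left; left; auto.
  - left; right; exact (supp_lt_of_hybr_lt sa sb l).
  - right; left; auto.
  - right; right; exact (supp_lt_of_hybr_lt sb sa l).
Qed.

Lemma branch_exceeds B y : branch H B -> B y -> exists w, B w /\ lt H y w.
Proof.
  intros hB hy. pose proof (proj1 (proj1 hB) y hy) as ny.
  destruct (hybr_sons_enum ny) as [e [_ es]].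
  assert (hs : sons H y (e 0)) by (apply es; eauto).
  apply NNPP; intro nw. apply nw. exists (e 0); split; [|exact (son_lt hs)].
  apply (branch_add hB (proj1 hs)). intros b hb.
  destruct (proj2 (proj1 hB) b y hb hy) as [h|[e'|h]].
  - left; right. exact (tree_le_lt_trans hybr_is_tree h (son_lt hs)).
  - subst. left; right; exact (son_lt hs).
  - exfalso; apply nw; eauto.
Qed.

(* If a tail of the branch stayed among the implants of [G], together with the root it would be a
   chain of [G]; an upper bound of it would lie on the branch, yet have a branch element above it. *)
Lemma branch_leaves_graft B G w : branch H B -> B w -> Gam G -> impl G w ->
  exists b, B b /\ lt H w b /\ ~ impl G b.
Proof.
  intros hB hw hG iw. apply NNPP; intro nex.
  assert (above : forall b, B b -> lt H w b -> impl G b).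
  { intros b hb lb. apply NNPP; intro ni. apply nex; eauto. }
  destruct (graft_has_least hG) as [r hr].
  set (C := fun u => u = r \/ (B u /\ impl G u)).
  assert (chC : chain G C).
  { split.
    - intros u [->|[_ i]]; [exact (proj1 hr)|exact (proj1 i)].
    - intros u v [->|[bu iu]] [->|[bv iv]].
      + left; left; auto.
      + left; exact (proj2 hr v (proj1 iv)).
      + right; exact (proj2 hr u (proj1 iu)).
      + destruct (proj2 (proj1 hB) u v bu bv) as [[e|l]|[e|l]].
        * left; left; auto.
        * left; right; apply (hybr_lt_graft_iff hG (proj1 iu) (proj1 iv)); auto.
        * right; left; auto.
        * right; right; apply (hybr_lt_graft_iff hG (proj1 iv) (proj1 iu)); auto. }
  destruct (proj1 (proj2 (Hbr hG)) C chC (ex_intro _ r (or_introl eq_refl))) as [u [nu bound]].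
  assert (le_u : forall b, nodes G b -> le G b u -> le H b u).
  { intros b nb [e|l]; [left; auto|right; apply (hybr_lt_graft_iff hG nb nu); auto]. }
  assert (wu : le H w u) by (apply le_u; [exact (proj1 iw)|apply bound; right; auto]).
  assert (Bu : B u).
  { apply (branch_add hB (hybr_node_graft hG nu)). intros b hb. left.
    destruct (proj2 (proj1 hB) b w hb hw) as [h|[e|l]].
    - exact (tree_le_trans hybr_is_tree h wu).
    - subst; exact wu.
    - pose proof (above b hb l) as ib. apply le_u; [exact (proj1 ib)|apply bound; right; auto]. }
  destruct (branch_exceeds hB Bu) as [b [hb lb]].
  pose proof (above b hb (tree_le_lt_trans hybr_is_tree wu lb)) as ib.
  assert (lb' : lt G u b) by (apply (hybr_lt_graft_iff hG nu (proj1 ib)); auto).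
  destruct (bound b (or_intror (conj hb ib))) as [e|l].
  - subst; exact (tree_lt_irrefl (graft_is_tree hG) lb').
  - exact (tree_lt_asym (graft_is_tree hG) lb' l).
Qed.

Lemma branch_supp_step B y : branch H B -> B y -> Supp y -> exists y', B y' /\ Supp y' /\ lt T y y'.
Proof.
  intros hB hy sy. destruct (branch_exceeds hB hy) as [w [hw lw]].
  destruct (hybr_node_cases (proj2 (hybr_lt_nodes lw))) as [sw|[G [hG iw]]].
  { exists w. split; auto. split; auto. exact (supp_lt_of_hybr_lt sy sw lw). }
  destruct (graft_has_least hG) as [r hr].
  destruct (hybr_lt_impl_inv lw hG iw hr) as [[_ lyr]|[[iy _]|[D [_ [hD [iy _]]]]]];
    [|exfalso; exact (supp_not_impl hG sy iy)|exfalso; exact (supp_not_impl hD sy iy)].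
  assert (past_max : forall m v, is_max G m -> le T m v -> lt T y v).
  { intros m v hm l. exact (tree_le_lt_le_trans HT lyr (proj2 (graft_max_above hG hr hm)) l). }
  destruct (branch_leaves_graft hB hw hG iw) as [b [hb [lb nib]]].
  destruct (hybr_node_cases (proj2 (hybr_lt_nodes lb))) as [sb|[E [hE ib]]].
  - destruct (hybr_lt_supp_inv lb sb) as [[sw _]|[D [m [hD [iw' [hm [l1 l2]]]]]]];
      [exfalso; exact (supp_not_impl hG sw iw)|].
    rewrite (impl_graft_unique hD hG iw' iw) in hm.
    exists b. eauto.
  - destruct (graft_has_least hE) as [rE hrE].
    destruct (hybr_lt_impl_inv lb hE ib hrE) as [[sw _]|[[iw' _]|[D [m [hD [iw' [hm [l1 l2]]]]]]]].
    + exfalso; exact (supp_not_impl hG sw iw).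
    + exfalso. apply nib. rewrite <- (impl_graft_unique hE hG iw' iw). auto.
    + rewrite (impl_graft_unique hD hG iw' iw) in hm.
      pose proof (supp_graft_least hE hrE) as srE.
      exists rE. split; [|eauto].
      apply (branch_down_closed hybr_is_tree hB hb). exact (hybr_lt_supp_impl srE hE ib hrE (or_introl eq_refl)).
Qed.

Lemma branch_supp_deep B k : branch H B -> exists y, B y /\ Supp y /\ k <= length (f y).
Proof.
  intros hB. induction k.
  - exists rT. split; [exact (branch_least hB hybr_least)|]. split; [exact supp_least|lia].
  - destruct IHk as [y [hy [sy ly]]]. destruct (branch_supp_step hB hy sy) as [y' [h1 [h2 h3]]].
    exists y'. split; auto. split; auto. pose proof (depth_lt_of_lt HT flt h3). lia.
Qed.

Lemma branch_supp_lt B a b : branch H B -> B a -> B b -> Supp a -> Supp b ->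
  length (f a) < length (f b) -> lt T a b.
Proof.
  intros hB ha hb sa sb l.
  destruct (supp_comparable_of_hybr sa sb (proj2 (proj1 hB) a b ha hb)) as [[e|h]|[e|h]]; auto;
    [subst; lia|subst; lia|pose proof (depth_lt_of_lt HT flt h); lia].
Qed.

Lemma branch_impl_below_max B G x : branch H B -> B x -> Gam G -> impl G x ->
  exists m y, is_max G m /\ lt G x m /\ le T m y /\ B y /\ Supp y.
Proof.
  intros hB hx hG ix. destruct (graft_has_least hG) as [r hr]. pose proof (supp_graft_least hG hr) as sr.
  assert (Br : B r).
  { apply (branch_down_closed hybr_is_tree hB hx). exact (hybr_lt_supp_impl sr hG ix hr (or_introl eq_refl)). }
  destruct (branch_supp_deep (S (length (f r))) hB) as [y [hy [sy ly]]].
  assert (lry : lt T r y) by exact (branch_supp_lt hB Br hy sr sy ly).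
  destruct (proj2 (proj1 hB) x y hx hy) as [[e|l]|[e|l]];
    try (subst; exfalso; exact (supp_not_impl hG sy ix)).
  - destruct (hybr_lt_supp_inv l sy) as [[sx _]|[D [m [hD [ix' [hm [l1 l2]]]]]]];
      [exfalso; exact (supp_not_impl hG sx ix)|].
    rewrite (impl_graft_unique hD hG ix' ix) in hm, l2. exists m, y; tauto.
  - exfalso. destruct (hybr_lt_impl_inv l hG ix hr) as [[_ l1]|[[iy _]|[D [_ [hD [iy _]]]]]].
    + exact (tree_lt_irrefl HT (tree_le_lt_trans HT l1 lry)).
    + exact (supp_not_impl hG sy iy).
    + exact (supp_not_impl hD sy iy).
Qed.

(** * Leaves of the hybrid *)

Variable op : (X -> Prop) -> Prop.
Hypothesis Fopen : ftree_open_in op (fun _ => True) F.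
Hypothesis Fls : locally_strict F.
Hypothesis Fsb : strict_branches F.
Hypothesis Froot : forall z, leaf F rT z <-> True.
Hypothesis Hfg : forall G, phi G -> foliage_graft F G.
Hypothesis Hsk : forall G G', phi G -> phi G' -> G <> G' -> skel G <> skel G'.
Hypothesis Hgl : forall G, phi G -> locally_strict G /\ ftree_open_in op (fun _ => True) G.

Let L := loss F phi.
Let FH := fhybr F phi.

Lemma skels_mem G : phi G -> Gam (skel G).
Proof. intros h. exists G; auto. Qed.

Lemma fhybr_leaf_supp x z : Supp x -> (leaf FH x z <-> leaf F x z /\ ~ L z).
Proof.
  intros sx. simpl. split.
  - intros [[[G [hG [ix _]]]|[_ h]] nl].
    + exfalso. exact (supp_not_impl (skels_mem hG) sx ix).
    + auto.
  - intros [h nl]. split; auto.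
Qed.

Lemma fhybr_leaf_graft G x z : phi G -> nodes (skel G) x -> (leaf FH x z <-> leaf G x z /\ ~ L z).
Proof.
  intros hG nx. pose proof (skels_mem hG) as gG. destruct (graft_has_least gG) as [r hr].
  destruct (Hfg hG) as [_ [_ [root_sub max_eq]]].
  destruct (graft_node_cases (graft_is_tree gG) hr nx) as [->|[m|i]].
  - rewrite (fhybr_leaf_supp z (supp_graft_least gG hr)). split.
    + intros [a nl]. split; auto. apply NNPP; intro nb. apply nl. exists G. split; auto. exists r; auto.
    + intros [a nl]. split; auto.
  - rewrite (fhybr_leaf_supp z (supp_graft_max gG m)), (max_eq x m z). reflexivity.
  - simpl. split.
    + intros [[[G' [hG' [ix' a]]]|[sx _]] nl].
      * assert (G' = G).
        { apply NNPP; intro ne. exact (Hsk hG' hG ne (impl_graft_unique (skels_mem hG') gG ix' i)). }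
        subst; auto.
      * exfalso; exact (supp_not_impl gG sx i).
    + intros [a nl]. split; auto. left. eauto.
Qed.

Lemma fhybr_open : ftree_open_in op (fun z => ~ L z) FH.
Proof.
  intros x nx. destruct (hybr_node_cases nx) as [sx|[Gs [[G [hG <-]] ix]]].
  - destruct (Fopen (proj1 sx)) as [U [oU hU]]. exists U. split; auto.
    intros z. rewrite (fhybr_leaf_supp z sx), hU. tauto.
  - destruct (proj2 (Hgl hG) x (proj1 ix)) as [U [oU hU]]. exists U. split; auto.
    intros z. rewrite (fhybr_leaf_graft z hG (proj1 ix)), hU. tauto.
Qed.

Lemma fhybr_locally_strict : locally_strict FH.
Proof.
  intros x nx _. destruct (hybr_node_kinds nx) as [[sx nr]|graft_node].
  - destruct (Fls (proj1 sx) (baire_not_max HT finj fsurj flt (proj1 sx))) as [F1 F2].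
    apply (locally_strict_at_restrict (A := FH) (B := F) (Q := fun z => ~ L z) (fun s => hybr_sons_supp s sx nr)); auto.
    intros y z [->|hs]; apply fhybr_leaf_supp; auto. exact (supp_son_supp sx nr hs).
  - assert (exists G r, phi G /\ is_least (skel G) r /\ (x = r \/ impl (skel G) x))
      as [G [r [hG [hr hx]]]].
    { destruct graft_node as [[Gs [[G [hG <-]] hr]]|[Gs [[G [hG <-]] ix]]].
      - exists G, x; auto.
      - destruct (graft_has_least (skels_mem hG)) as [r hr]. exists G, r; auto. }
    assert (nx' : nodes (skel G) x) by (destruct hx as [->|i]; [exact (proj1 hr)|exact (proj1 i)]).
    assert (nm : ~ is_max (skel G) x)
      by (destruct hx as [->|i]; [exact (graft_least_not_max (skels_mem hG) hr)|exact (proj2 (proj2 i))]).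
    destruct (proj1 (Hgl hG) x nx' nm) as [G1 G2].
    apply (locally_strict_at_restrict (A := FH) (B := G) (Q := fun z => ~ L z) (fun s => hybr_sons_graft s (skels_mem hG) hr hx)); auto.
    intros y z [->|hs]; apply fhybr_leaf_graft; auto. exact (proj1 hs).
Qed.

Lemma branch_supp_trace B : branch H B -> branch T (fun v => exists y, B y /\ Supp y /\ le T v y).
Proof.
  intros hB. split; [split|].
  - intros v [y [_ [sy [<-|l]]]]; [exact (proj1 sy)|exact (proj1 (tree_lt_nodes HT l))].
  - intros v1 v2 [y1 [b1 [s1 l1]]] [y2 [b2 [s2 l2]]].
    destruct (supp_comparable_of_hybr s1 s2 (proj2 (proj1 hB) y1 y2 b1 b2)) as [h|h].
    + exact (comparable_of_le_common HT (tree_le_trans HT l1 h) l2).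
    + exact (comparable_of_le_common HT l1 (tree_le_trans HT l2 h)).
  - intros C [Cn Cc] sub v hv.
    destruct (branch_supp_deep (length (f v)) hB) as [y [hy [sy ly]]].
    assert (Cy : C y) by (apply sub; exists y; split; auto; split; auto; left; auto).
    destruct (Cc v y hv Cy) as [h|[e|h]].
    + exists y; split; [|split]; auto.
    + exists y; split; [|split]; auto. left; auto.
    + pose proof (depth_lt_of_lt HT flt h). lia.
Qed.

(* The supported nodes of the branch go arbitrarily deep; sharing the point [p] with the root [r]
   of a graft, such a node lies above [r], hence above a maximal node [m], and [p] in the leaf of [m]
   puts it in the graft leaf of [r]. *)
Lemma branch_fruit_not_lost B p : branch H B -> (forall y, B y -> Supp y -> leaf F y p) -> ~ L p.
Proof.
  intros hB Fy [G [hG [r [hr [lr nlr]]]]]. pose proof (skels_mem hG) as gG.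
  pose proof (supp_graft_least gG hr) as sr.
  destruct (branch_supp_deep (S (length (f r))) hB) as [y [hy [sy ly]]].
  destruct (comparable_of_common_leaf HT finj fsurj flt HrT Fls (proj1 sr) (proj1 sy) lr (Fy y hy sy))
    as [[e|l]|h].
  - subst. lia.
  - destruct (supp_above_graft_max gG hr sy l) as [m [hm lm]].
    destruct (Hfg hG) as [G_noninc [_ [_ max_eq]]].
    apply nlr. apply (G_noninc r m (proj1 hr) (proj1 hm) (proj2 hr m (proj1 hm))). apply max_eq; auto.
    exact (baire_nonincreasing HT finj fsurj flt HrT Fls
             (proj1 (graft_max_above gG hr hm)) (proj1 sy) lm (Fy y hy sy)).
  - pose proof (depth_le_of_le HT flt h). lia.
Qed.

Lemma fhybr_strict_branches : strict_branches FH.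
Proof.
  split; [exists rT; exact (proj1 hybr_least)|].
  intros B hB. change (branch H B) in hB.
  pose proof (baire_nonincreasing HT finj fsurj flt HrT Fls) as F_noninc.
  pose proof (branch_supp_trace hB) as trace.
  destruct (proj2 Fsb _ trace) as [p hp].
  assert (Fy : forall y, B y -> Supp y -> leaf F y p).
  { intros y hy sy. apply (proj2 (hp p) eq_refl). exists y; split; auto; split; auto; left; auto. }
  exists p. intros z. split.
  - intros fz. apply hp. intros v hv. pose proof hv as [y [hy [sy l]]].
    apply (F_noninc v y (proj1 (proj1 trace) v hv) (proj1 sy) l).
    exact (proj1 (proj1 (fhybr_leaf_supp z sy) (fz y hy))).
  - intros ->. intros x hx. destruct (hybr_node_cases (proj1 (proj1 hB) x hx)) as [sx|[Gs [hGs ix]]].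
    + apply (fhybr_leaf_supp p sx). split; auto. exact (branch_fruit_not_lost hB Fy).
    + destruct hGs as [G [hG <-]].
      destruct (branch_impl_below_max hB hx (skels_mem hG) ix) as [m [y [hm [lxm [lmy [hy sy]]]]]].
      apply (fhybr_leaf_graft p hG (proj1 ix)). split; [|exact (branch_fruit_not_lost hB Fy)].
      destruct (Hfg hG) as [G_noninc [_ [_ max_eq]]].
      apply (G_noninc x m (proj1 ix) (proj1 hm) (or_intror lxm)). apply max_eq; auto.
      exact (F_noninc m y (proj1 (supp_graft_max (skels_mem hG) hm)) (proj1 sy) lmy p (Fy y hy sy)).
Qed.

Lemma fhybr_baire : baire_ftree op (fun z => ~ L z) FH.
Proof.
  split; [exact hybr_is_tree|]. split; [exact hybr_iso_baire|]. split; [exact fhybr_open|].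
  split; [exact fhybr_locally_strict|]. split; [exact fhybr_strict_branches|].
  exists rT. split; [exact hybr_least|]. intros z. rewrite (fhybr_leaf_supp z supp_least), Froot. tauto.
Qed.
End Hybrid.

Theorem mainTheorem11 (N X : Type) (op : (X -> Prop) -> Prop)
  (F : ftree N X) (phi : ftree N X -> Prop) :
  is_topology op ->
  baire_ftree op (fun _ => True) F ->
  consistent_fgrafts F phi ->
  (forall G, phi G ->
     aleph0_branching (skel G) /\ locally_strict G /\
     ftree_open_in op (fun _ => True) G /\ bounded_chains (skel G) /\
     height_le_omega (skel G)) ->
  baire_ftree op (fun z => ~ loss F phi z) (fhybr F phi).
Proof.
  intros _ [HT [[f [finj [fsurj flt]]] [Fopen [Fls [Fsb [rT [HrT Froot]]]]]]] [Hfg [Hsk HGam]] Hg.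
  apply (fhybr_baire HT finj fsurj flt HrT HGam); auto.
  - intros Gs [G [hG <-]]. destruct (Hg G hG) as [a [_ [_ [b c]]]]. auto.
  - intros G hG. destruct (Hg G hG) as [_ [a [b _]]]. auto.
Qed.
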